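(* There exist, for every pair $0<v\le u<\infty$, constants $0<c_{u,v}\le C_{u,v}<\infty$ depending only on $u$ and $v$ such that the following holds. Let $d\in\mathbb N_+$, ${\bf R}=(R_1,\dots,R_d)\in\mathbb R_+^d$ with $u=\max\{R_1,\dots,R_d\}$ and $v=\min\{R_1,\dots,R_d\}$, and let $g({\bf R})=\frac{1}{1/R_1+\cdots+1/R_d}$. Write $a_n:=a_n(I_d: W_2^{\bf R}(\mathbb T^d)\to L_2(\mathbb T^d))$. Then $c_{u,v}\,\phi(n)\le a_n\le C_{u,v}\,\phi(n)$ for all $n\in\mathbb N_+$, where $$\phi(n)=\begin{cases}1, & 1\le n\le d,\\ \Big(\frac{\log(1+\frac{d}{\log n})}{\log n}\Big)^{1/2}, & d\le n\le 3^d,\\ d^{-1/2}n^{-g({\bf R})}, & n\ge 3^d.\end{cases}$$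
   Context: $\log$ denotes the logarithm to base 2. $\mathbb T=[0,2\pi]$ with endpoints identified, $\mathbb T^d$ is equipped with the normalized Lebesgue measure $(2\pi)^{-d}d{\bf x}$, and $\hat f({\bf k})=(2\pi)^{-d}\int_{\mathbb T^d}f({\bf x})e^{-i{\bf k}\cdot{\bf x}}d{\bf x}$, ${\bf k}\in\mathbb Z^d$. For ${\bf R}\in\mathbb R_+^d$, the anisotropic Sobolev space $W_2^{\bf R}(\mathbb T^d)$ is the Hilbert space of all $f\in L_2(\mathbb T^d)$ with finite norm $\|f|W_2^{\bf R}(\mathbb T^d)\|=\big(\sum_{{\bf k}\in\mathbb Z^d}(1+\sum_{j=1}^d|k_j|^{2R_j})|\hat f({\bf k})|^2\big)^{1/2}$ (equivalently $\|f\|_{L_2}^2+\sum_j\|\partial^{R_j}f/\partial x_j^{R_j}\|_{L_2}^2$ with Weyl derivatives). $I_d$ denotes the identity (embedding) operator. For a bounded linear operator $T:X\to Y$ between Banach spaces, the approximation numbers are $a_n(T)=\inf\{\|T-A\|: A:X\to Y \text{ linear}, \operatorname{rank}A<n\}$, $n\in\mathbb N_+$. *)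

From Stdlib Require Import Reals Lra Lia ZArith Arith List.
Open Scope R_scope.

Definition CC : Type := (R * R)%type.
Definition Cadd (a b : CC) : CC := (fst a + fst b, snd a + snd b).
Definition Cmul (a b : CC) : CC :=
  (fst a * fst b - snd a * snd b, fst a * snd b + snd a * fst b).
Definition Copp (a : CC) : CC := (- fst a, - snd a).
Definition C0 : CC := (0, 0).
Definition Cnorm2 (a : CC) : R := fst a * fst a + snd a * snd a.

(* The frequency lattice Z^d: integer lists of length d. *)
Definition Zd (d : nat) : Type := { k : list Z | length k = d }.

(* Sequences of Fourier coefficients indexed by Z^d. *)
Definition vec (d : nat) : Type := Zd d -> CC.
Definition vzero {d} : vec d := fun _ => C0.
Definition vadd {d} (x y : vec d) : vec d := fun k => Cadd (x k) (y k).
Definition vscale {d} (c : CC) (x : vec d) : vec d := fun k => Cmul c (x k).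
Definition vsub {d} (x y : vec d) : vec d := fun k => Cadd (x k) (Copp (y k)).

Definition fsum {A : Type} (f : A -> R) (l : list A) : R :=
  fold_right (fun a s => f a + s) 0 l.

(* t^p with the convention 0^p = 0 (p > 0). *)
Definition rpow0 (t p : R) : R :=
  if Req_EM_T t 0 then 0 else Rpower t p.

Definition weight (Rs : list R) (k : list Z) : R :=
  1 + fold_right (fun p s => rpow0 (IZR (Z.abs (fst p))) (2 * snd p) + s) 0
        (combine k Rs).

Definition W_partial (Rs : list R) {d} (x : vec d) (l : list (Zd d)) : R :=
  fsum (fun k => weight Rs (proj1_sig k) * Cnorm2 (x k)) l.

Definition L2_partial {d} (y : vec d) (l : list (Zd d)) : R :=
  fsum (fun k => Cnorm2 (y k)) l.

Definition in_W (Rs : list R) (d : nat) (x : vec d) : Prop :=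
  exists M, forall l, NoDup l -> W_partial Rs x l <= M.

(* membership in L_2(T^d) (Fourier side, Parseval) *)
Definition in_L2 (d : nat) (y : vec d) : Prop :=
  exists M, forall l, NoDup l -> L2_partial y l <= M.

Definition W_unit_ball (Rs : list R) (d : nat) (x : vec d) : Prop :=
  forall l, NoDup l -> W_partial Rs x l <= 1.

Definition L2_norm_is (d : nat) (y : vec d) (r : R) : Prop :=
  0 <= r /\ is_lub (fun t => exists l, NoDup l /\ t = L2_partial y l) (r * r).

Definition linear_on (Rs : list R) (d : nat) (A : vec d -> vec d) : Prop :=
  (forall x, in_W Rs d x -> in_L2 d (A x)) /\
  (forall x y, in_W Rs d x -> in_W Rs d y -> A (vadd x y) = vadd (A x) (A y)) /\
  (forall c x, in_W Rs d x -> A (vscale c x) = vscale c (A x)).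

Definition lincomb {d} (cs : list CC) (ys : list (vec d)) : vec d :=
  fold_right (fun p acc => vadd (vscale (fst p) (snd p)) acc) vzero (combine cs ys).

Definition rank_lt (Rs : list R) (d : nat) (A : vec d -> vec d) (n : nat) : Prop :=
  exists ys : list (vec d), length ys = (n - 1)%nat /\ Forall (in_L2 d) ys /\
    forall x, in_W Rs d x -> exists cs : list CC, length cs = length ys /\ A x = lincomb cs ys.

Definition op_norm_diff_is (Rs : list R) (d : nat) (A : vec d -> vec d) (s : R) : Prop :=
  is_lub (fun r => exists x, W_unit_ball Rs d x /\ L2_norm_is d (vsub x (A x)) r) s.

Definition is_glb (E : R -> Prop) (m : R) : Prop :=
  (forall x, E x -> m <= x) /\ (forall b, (forall x, E x -> b <= x) -> b <= m).

Definition approx_number_is (Rs : list R) (d n : nat) (a : R) : Prop :=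
  is_glb (fun s => exists A : vec d -> vec d,
             linear_on Rs d A /\ rank_lt Rs d A n /\ op_norm_diff_is Rs d A s) a.

Definition log2 (x : R) : R := ln x / ln 2.

Definition gR (Rs : list R) : R := / fold_right (fun r s => / r + s) 0 Rs.

Definition phi (Rs : list R) (d n : nat) : R :=
  if (n <=? d)%nat then 1
  else if (n <=? 3 ^ d)%nat then
    sqrt (log2 (1 + INR d / log2 (INR n)) / log2 (INR n))
  else / sqrt (INR d) * Rpower (INR n) (- gR Rs).

(* In the Fourier basis the embedding is diagonal with singular values [w(k)^(-1/2)], where
   [w(k) = 1 + sum_j |k_j|^(2 R_j)]; so [a_n = w_n^(-1/2)] for the [n]-th smallest weight [w_n].
   Projecting onto the fewer than [n] frequencies of weight [< t] gives [a_n <= t^(-1/2)];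
   conversely an operator of rank [< n] annihilates a vector spanned by [n] frequencies of
   weight [<= tau], so [a_n >= tau^(-1/2)].  Many frequencies of small weight are found in the
   cube [{-1,0,1}^d], among the vectors with one entry [1] in each of [m] blocks of
   coordinates, and in boxes with half-widths [~ n^(g / R_j)].  The frequencies of weight
   [< t] are counted by Chernoff's bound
     [#{w < t} <= e^(lam (t - 1)) prod_j theta_(R_j)(lam)],
     [theta_r(lam) = sum_z e^(-lam |z|^(2 r))],
   with [lam >= 1] when [n <= 3^d], and with [lam <= 1], where [theta_r(lam) ~ lam^(-1/(2 r))],
   beyond. *)

From Stdlib Require Import Reals List Lra Lia ZArith Arith.
From Stdlib Require Import FunctionalExtensionality Classical Eqdep_dec.
Import ListNotations.
Open Scope R_scope.

Lemma exp_le_compat x y : x <= y -> exp x <= exp y.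
Proof. intros [H|H]; [left; apply exp_increasing; auto|subst; lra]. Qed.

Lemma ln_le_compat x y : 0 < x -> x <= y -> ln x <= ln y.
Proof. intros Hx [H|H]; [left; apply ln_increasing; auto|subst; lra]. Qed.

Lemma ln_gt_0 x : 1 < x -> 0 < ln x.
Proof. intros. rewrite <- ln_1. apply ln_increasing; lra. Qed.

Lemma ln_ge_2 x : 16 <= x -> 2 <= ln x.
Proof.
  intros Hx. rewrite <- (ln_exp 2). apply ln_le_compat; [apply exp_pos|].
  replace 2 with (1 + 1) by ring. rewrite exp_plus. pose proof exp_le_3. pose proof (exp_pos 1). nra.
Qed.

Lemma ln_le_sub1 y : 0 < y -> ln y <= y - 1.
Proof.
  intros Hy. destruct (Rle_dec (ln y) (y - 1)) as [|Hgt]; auto.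
  assert (Hlt : exp (y - 1) < exp (ln y)) by (apply exp_increasing; lra).
  rewrite exp_ln in Hlt by auto. pose proof (exp_ineq1_le (y - 1)). lra.
Qed.

Lemma ln_ge_1_sub_inv x : 0 < x -> 1 - / x <= ln x.
Proof.
  intros Hx. pose proof (ln_le_sub1 (/ x) (Rinv_0_lt_compat _ Hx)) as Hle.
  rewrite ln_Rinv in Hle by auto. lra.
Qed.

Lemma ln_div x y : 0 < x -> 0 < y -> ln (x / y) = ln x - ln y.
Proof.
  intros. unfold Rdiv. rewrite ln_mult, ln_Rinv by (auto; apply Rinv_0_lt_compat; auto). ring.
Qed.

Lemma exp_INR_mul a n : exp (INR n * a) = exp a ^ n.
Proof.
  induction n; [simpl; rewrite Rmult_0_l, exp_0; auto|].
  rewrite S_INR. simpl. rewrite <- IHn, <- exp_plus. f_equal. ring.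
Qed.

Lemma Rpower_ge1 z p : 1 <= z -> 0 <= p -> 1 <= Rpower z p.
Proof. intros Hz Hp. rewrite <- (Rpower_O z) by lra. apply Rle_Rpower; lra. Qed.

Lemma ln2_bounds : / 2 < ln 2 < 1.
Proof.
  split; [exact ln_lt_2|].
  rewrite <- (ln_exp 1). apply ln_increasing; [lra|]. pose proof (exp_ineq1 1). lra.
Qed.

Lemma ln3_ge1 : 1 <= ln 3.
Proof. rewrite <- (ln_exp 1). apply ln_le_compat; [apply exp_pos|apply exp_le_3]. Qed.

Lemma ln3_le_ln2 : 3 * ln 3 <= 5 * ln 2.
Proof.
  replace 3 with (INR 3) at 1 by (simpl; lra). replace 5 with (INR 5) at 1 by (simpl; lra).
  rewrite <- !ln_pow by lra. apply ln_le_compat; simpl; lra.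
Qed.

Lemma ln_1_plus_bounds y : 3 / 5 <= y -> 3 / 8 <= ln (1 + y) <= y.
Proof.
  intros Hy. split.
  - pose proof (ln_ge_1_sub_inv (1 + y) ltac:(lra)).
    assert (/ (1 + y) <= 5 / 8); [|lra].
    apply Rle_trans with (/ (8 / 5)); [apply Rinv_le_contravar|]; lra.
  - pose proof (ln_le_sub1 (1 + y) ltac:(lra)). lra.
Qed.

Definition nat_up (x : R) : nat := Z.to_nat (up x).

Lemma nat_up_spec x : 0 <= x -> x <= INR (nat_up x) <= x + 1.
Proof.
  intros Hx. unfold nat_up. destruct (archimed x) as [H1 H2].
  assert (0 <= up x)%Z by (apply le_IZR; lra).
  rewrite INR_IZR_INZ, Z2Nat.id by auto. lra.
Qed.

Definition nat_down (x : R) : nat := Z.to_nat (up x - 1).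

Lemma nat_down_spec x : 0 <= x -> INR (nat_down x) <= x < INR (nat_down x) + 1.
Proof.
  intros Hx. unfold nat_down. destruct (archimed x) as [H1 H2].
  assert (1 <= up x)%Z by (apply le_IZR; assert (0 < up x)%Z by (apply lt_IZR; lra);
                           apply IZR_le; lia).
  rewrite INR_IZR_INZ, Z2Nat.id, minus_IZR by lia. simpl. lra.
Qed.

Lemma fsum_app {A} (f : A -> R) l1 l2 : fsum f (l1 ++ l2) = fsum f l1 + fsum f l2.
Proof. induction l1; simpl; [|rewrite IHl1]; ring. Qed.

Lemma fsum_le {A} (f g : A -> R) l : (forall a, In a l -> f a <= g a) -> fsum f l <= fsum g l.
Proof.
  induction l; simpl; intros H; [lra|].
  assert (f a <= g a) by auto. assert (fsum f l <= fsum g l) by auto. lra.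
Qed.

Lemma fsum_nonneg {A} (f : A -> R) l : (forall a, In a l -> 0 <= f a) -> 0 <= fsum f l.
Proof.
  induction l; simpl; intros H; [lra|].
  assert (0 <= f a) by auto. assert (0 <= fsum f l) by auto. lra.
Qed.

Lemma fsum_pos {A} (f : A -> R) l a : (forall b, In b l -> 0 <= f b) -> In a l -> 0 < f a ->
  0 < fsum f l.
Proof.
  induction l as [|b l IH]; simpl; intros H Ha Hpos; [contradiction|].
  destruct Ha as [<-|Ha].
  - assert (0 <= fsum f l) by (apply fsum_nonneg; auto). lra.
  - assert (0 <= f b) by auto. assert (0 < fsum f l) by auto. lra.
Qed.

Lemma fsum_scal {A} (f : A -> R) c l : fsum (fun a => c * f a) l = c * fsum f l.
Proof. induction l; simpl; [|rewrite IHl]; ring. Qed.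

Lemma fsum_plus {A} (f g : A -> R) l : fsum (fun a => f a + g a) l = fsum f l + fsum g l.
Proof. induction l; simpl; [|rewrite IHl]; ring. Qed.

Lemma fsum_ext {A} (f g : A -> R) l : (forall a, In a l -> f a = g a) -> fsum f l = fsum g l.
Proof. induction l; simpl; intros H; auto. rewrite H, IHl by auto. reflexivity. Qed.

Lemma fsum_zero {A} (f : A -> R) l : (forall a, In a l -> f a = 0) -> fsum f l = 0.
Proof. induction l; simpl; intros H; auto. rewrite H, IHl by auto. ring. Qed.

Lemma fsum_map {X Y} (f : Y -> R) (h : X -> Y) l : fsum f (map h l) = fsum (fun x => f (h x)) l.
Proof. induction l; simpl; [|rewrite IHl]; auto. Qed.

Lemma fsum_flat_map {X Y} (f : Y -> R) (h : X -> list Y) l :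
  fsum f (flat_map h l) = fsum (fun x => fsum f (h x)) l.
Proof. induction l; simpl; [|rewrite fsum_app, IHl]; auto. Qed.

Fixpoint rsum (n : nat) (f : nat -> R) : R :=
  match n with O => 0 | S n => rsum n f + f n end.

Lemma rsum_ext n f g : (forall i, (i < n)%nat -> f i = g i) -> rsum n f = rsum n g.
Proof.
  induction n; simpl; intros H; auto.
  rewrite IHn by (intros; apply H; lia). rewrite H by lia. reflexivity.
Qed.

Lemma rsum_le n f g : (forall i, (i < n)%nat -> f i <= g i) -> rsum n f <= rsum n g.
Proof.
  induction n; simpl; intros H; [lra|].
  assert (rsum n f <= rsum n g) by (apply IHn; intros; apply H; lia).
  assert (f n <= g n) by (apply H; lia). lra.
Qed.

Lemma rsum_scal n c f : rsum n (fun i => c * f i) = c * rsum n f.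
Proof. induction n; simpl; [|rewrite IHn]; ring. Qed.

Lemma fold_prod_nonneg (F : R -> R) (Rs : list R) :
  (forall r, In r Rs -> 0 <= F r) -> 0 <= fold_right (fun r p => F r * p) 1 Rs.
Proof.
  induction Rs as [|a Rs IH]; simpl; intros H; [lra|].
  apply Rmult_le_pos; [apply H; simpl; auto|apply IH; intros; apply H; simpl; auto].
Qed.

Lemma fold_prod_le (F G : R -> R) (Rs : list R) :
  (forall r, In r Rs -> 0 <= F r <= G r) ->
  fold_right (fun r p => F r * p) 1 Rs <= fold_right (fun r p => G r * p) 1 Rs.
Proof.
  induction Rs as [|a Rs IH]; simpl; intros H; [lra|].
  destruct (H a) as [Ha1 Ha2]; [simpl; auto|].
  apply Rmult_le_compat; auto.
  apply fold_prod_nonneg. intros r Hr. apply H. simpl; auto.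
Qed.

Lemma fold_prod_const (c : R) (Rs : list R) : fold_right (fun r p => c * p) 1 Rs = c ^ length Rs.
Proof. induction Rs; simpl; [|rewrite IHRs]; auto. Qed.

Lemma fold_prod_exp (F : R -> R) (a : R -> R) Rs :
  (forall r, In r Rs -> exp (a r) <= F r) ->
  exp (fold_right (fun r s => a r + s) 0 Rs) <= fold_right (fun r p => F r * p) 1 Rs.
Proof.
  induction Rs as [|r Rs IH]; intros H; simpl; [rewrite exp_0; lra|].
  rewrite exp_plus. apply Rmult_le_compat; try (left; apply exp_pos); [apply H; simpl; auto|].
  apply IH. intros; apply H; simpl; auto.
Qed.

Lemma fold_sum_le (F G : R -> R) Rs : (forall r, In r Rs -> F r <= G r) ->
  fold_right (fun r s => F r + s) 0 Rs <= fold_right (fun r s => G r + s) 0 Rs.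
Proof.
  induction Rs as [|r Rs IH]; intros H; simpl; [lra|].
  assert (F r <= G r) by (apply H; simpl; auto).
  assert (fold_right (fun r s => F r + s) 0 Rs <= fold_right (fun r s => G r + s) 0 Rs)
    by (apply IH; intros; apply H; simpl; auto). lra.
Qed.

Lemma fold_sum_const (c : R) (Rs : list R) : fold_right (fun r s => c + s) 0 Rs = INR (length Rs) * c.
Proof. induction Rs; cbn [fold_right length]; [simpl; ring|rewrite IHRs, S_INR; ring]. Qed.

Lemma NoDup_flat_map_map {X Y Z0} (g : X -> Y -> Z0) (l : list X) (L : list Y) :
  NoDup l -> NoDup L ->
  (forall x1 x2 y1 y2, In x1 l -> In x2 l -> In y1 L -> In y2 L -> g x1 y1 = g x2 y2 ->
     x1 = x2 /\ y1 = y2) ->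
  NoDup (flat_map (fun x => map (g x) L) l).
Proof.
  induction l as [|a l IH]; intros Hl HL Hi; simpl; [constructor|].
  inversion Hl; subst. apply NoDup_app.
  - apply NoDup_map_NoDup_ForallPairs; auto. intros y1 y2 Hy1 Hy2 He. apply (Hi a a y1 y2); simpl; auto.
  - apply IH; auto. intros; apply Hi; simpl; auto.
  - intros w Hw Hw'. apply in_map_iff in Hw. destruct Hw as [y1 [<- Hy1]].
    apply in_flat_map in Hw'. destruct Hw' as [x2 [Hx2 Hw']]. apply in_map_iff in Hw'.
    destruct Hw' as [y2 [Heq Hy2]]. destruct (Hi a x2 y1 y2) as [-> _]; simpl; auto.
Qed.

Lemma length_flat_map_map {X Y Z0} (g : X -> Y -> Z0) (l : list X) (L : list Y) :
  length (flat_map (fun x => map (g x) L) l) = (length l * length L)%nat.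
Proof. induction l; simpl; [|rewrite length_app, length_map, IHl]; lia. Qed.

Lemma app_inj_length {X} (a a' r r' : list X) : length a = length a' -> a ++ r = a' ++ r' ->
  a = a' /\ r = r'.
Proof.
  revert a'; induction a as [|x a IH]; intros [|x' a'] Hl He; simpl in *; try lia; auto.
  inversion He; subst. destruct (IH a') as [-> ->]; auto.
Qed.

Lemma nth_map_indep {X Y} (f : X -> Y) (l : list X) dflt d0 i : (i < length l)%nat ->
  nth i (map f l) dflt = f (nth i l d0).
Proof.
  intros H. rewrite nth_indep with (d' := f d0) by (rewrite length_map; lia). apply map_nth.
Qed.

Lemma fin_choice {B} (b0 : B) n (P : nat -> B -> Prop) :
  (forall i, (i < n)%nat -> exists y, P i y) -> exists f, forall i, (i < n)%nat -> P i (f i).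
Proof.
  induction n; intros H.
  - exists (fun _ => b0). intros; lia.
  - destruct IHn as [f Hf]; [intros; apply H; lia|].
    destruct (H n) as [y Hy]; [lia|].
    exists (fun i => if Nat.eq_dec i n then y else f i). intros i Hi.
    destruct (Nat.eq_dec i n); [subst; auto|]. apply Hf; lia.
Qed.

Definition Cone : CC := (1, 0).
Definition Csub (a b : CC) : CC := Cadd a (Copp b).
Definition Cinv (a : CC) : CC := (fst a / Cnorm2 a, - snd a / Cnorm2 a).
Definition Cdiv (a b : CC) : CC := Cmul a (Cinv b).

Lemma Cnorm2_nonneg a : 0 <= Cnorm2 a.
Proof. unfold Cnorm2; nra. Qed.

Lemma Cnorm2_pos a : a <> C0 -> 0 < Cnorm2 a.
Proof.
  destruct a as [x y]; unfold Cnorm2, C0; simpl; intro H.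
  destruct (Req_dec x 0), (Req_dec y 0); subst; try nra. now elim H.
Qed.

Lemma Cnorm2_mul a b : Cnorm2 (Cmul a b) = Cnorm2 a * Cnorm2 b.
Proof. destruct a, b; unfold Cnorm2, Cmul; simpl. ring. Qed.

Lemma Cnorm2_add_le a b : Cnorm2 (Cadd a b) <= 2 * Cnorm2 a + 2 * Cnorm2 b.
Proof.
  destruct a as [a1 a2], b as [b1 b2]; unfold Cnorm2, Cadd; simpl.
  pose proof (Rle_0_sqr (a1 - b1)); pose proof (Rle_0_sqr (a2 - b2)); unfold Rsqr in *; nra.
Qed.

Lemma Cnorm2_C0 : Cnorm2 C0 = 0.
Proof. unfold Cnorm2, C0; simpl; ring. Qed.

Lemma CC_ring : ring_theory C0 Cone Cadd Cmul Csub Copp (@eq CC).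
Proof.
  constructor; intros;
  repeat match goal with p : CC |- _ => destruct p end;
  unfold Csub, Cadd, Cmul, Copp, C0, Cone; simpl; f_equal; ring.
Qed.

Lemma CC_field : field_theory C0 Cone Cadd Cmul Csub Copp Cdiv Cinv (@eq CC).
Proof.
  constructor.
  - exact CC_ring.
  - unfold Cone, C0; intro H; inversion H; lra.
  - reflexivity.
  - intros a Ha. pose proof (Cnorm2_pos a Ha) as Hn. destruct a as [x y].
    unfold Cinv, Cmul, Cone, Cnorm2 in *; simpl in *. f_equal; field; lra.
Qed.

Add Field CC_field_inst : CC_field.

Fixpoint csum (n : nat) (f : nat -> CC) : CC :=
  match n with O => C0 | S n => Cadd (csum n f) (f n) end.

Lemma csum_ext n f g : (forall i, (i < n)%nat -> f i = g i) -> csum n f = csum n g.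
Proof.
  induction n; simpl; intros H; auto.
  rewrite IHn by (intros; apply H; lia). rewrite H by lia. reflexivity.
Qed.

Lemma csum_add n f g : csum n (fun i => Cadd (f i) (g i)) = Cadd (csum n f) (csum n g).
Proof. induction n; simpl; [|rewrite IHn]; ring. Qed.

Lemma csum_mul_l n c f : csum n (fun i => Cmul c (f i)) = Cmul c (csum n f).
Proof. induction n; simpl; [|rewrite IHn]; ring. Qed.

Lemma csum_zero n f : (forall i, (i < n)%nat -> f i = C0) -> csum n f = C0.
Proof.
  intros H; induction n; simpl; auto.
  rewrite IHn by (intros; apply H; lia). rewrite H by lia. ring.
Qed.

Lemma csum_shift n f : csum (S n) f = Cadd (f O) (csum n (fun i => f (S i))).
Proof. induction n; simpl in *; [|rewrite IHn]; ring. Qed.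

Lemma csum_swap n m F :
  csum n (fun i => csum m (fun j => F i j)) = csum m (fun j => csum n (fun i => F i j)).
Proof.
  induction n; simpl.
  - symmetry; apply csum_zero; auto.
  - rewrite IHn, <- csum_add. reflexivity.
Qed.

Definition skip (i0 i : nat) : nat := if (i <? i0)%nat then i else S i.

Lemma skip_neq i0 i : skip i0 i <> i0.
Proof. unfold skip; destruct (Nat.ltb_spec i i0); lia. Qed.

Lemma skip_lt i0 i n : (i < n)%nat -> (skip i0 i < S n)%nat.
Proof. unfold skip; destruct (Nat.ltb_spec i i0); lia. Qed.

Definition unskip (i0 i : nat) : nat := if (i <? i0)%nat then i else pred i.

Lemma unskip_skip i0 i : unskip i0 (skip i0 i) = i.
Proof.
  unfold unskip, skip. destruct (Nat.ltb_spec i i0).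
  - destruct (Nat.ltb_spec i i0); lia.
  - destruct (Nat.ltb_spec (S i) i0); lia.
Qed.

Lemma csum_skip n f i0 : (i0 < S n)%nat ->
  csum (S n) f = Cadd (f i0) (csum n (fun i => f (skip i0 i))).
Proof.
  revert i0; induction n; intros i0 Hi.
  - simpl. replace i0 with O by lia. ring.
  - change (csum (S (S n)) f) with (Cadd (csum (S n) f) (f (S n))).
    destruct (Nat.eq_dec i0 (S n)) as [->|Hne].
    + rewrite (csum_ext (S n) (fun i => f (skip (S n) i)) f); [ring|].
      intros i Hi'. unfold skip. destruct (Nat.ltb_spec i (S n)); auto; lia.
    + rewrite (IHn i0) by lia. cbn [csum].
      replace (skip i0 n) with (S n) by (unfold skip; destruct (Nat.ltb_spec n i0); lia). ring.
Qed.

Lemma homogeneous_system_nontrivial m n (V : nat -> nat -> CC) : (m < n)%nat ->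
  exists b : nat -> CC, (exists i, (i < n)%nat /\ b i <> C0) /\
    forall j, (j < m)%nat -> csum n (fun i => Cmul (b i) (V i j)) = C0.
Proof.
  revert n V; induction m; intros n V Hmn.
  - exists (fun _ => Cone). split; [|intros; lia].
    exists O. split; [lia|]. unfold Cone, C0. intro H; inversion H; lra.
  - destruct (classic (forall i, (i < n)%nat -> V i m = C0)) as [Hz|Hnz].
    + destruct (IHm n V) as [b [Hb Hk]]; [lia|].
      exists b; split; auto. intros j Hj. destruct (Nat.eq_dec j m) as [->|].
      * apply csum_zero. intros i Hi. rewrite Hz by auto. ring.
      * apply Hk; lia.
    + apply not_all_ex_not in Hnz. destruct Hnz as [i0 Hi0].
      apply imply_to_and in Hi0. destruct Hi0 as [Hi0n Hp].
      destruct n as [|n']; [lia|].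
      (* Gaussian elimination of column [m] with pivot row [i0]. *)
      set (c := fun i => Cdiv (V (skip i0 i) m) (V i0 m)).
      set (V' := fun i j => Csub (V (skip i0 i) j) (Cmul (c i) (V i0 j))).
      destruct (IHm n' V') as [b' [[i1 [Hi1 Hb1]] Hk]]; [lia|].
      set (beta := csum n' (fun i => Cmul (b' i) (c i))).
      set (b := fun i => if Nat.eq_dec i i0 then Copp beta else b' (unskip i0 i)).
      assert (Hbs : forall i, b (skip i0 i) = b' i).
      { intro i. unfold b. destruct (Nat.eq_dec (skip i0 i) i0) as [e|].
        - exfalso; exact (skip_neq _ _ e).
        - rewrite unskip_skip. reflexivity. }
      exists b. split.
      * exists (skip i0 i1). split; [apply skip_lt; auto|]. rewrite Hbs; auto.
      * intros j Hj.
        rewrite (csum_skip n' _ i0) by lia.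
        rewrite (csum_ext n' _ (fun i => Cadd (Cmul (b' i) (V' i j))
                                            (Cmul (V i0 j) (Cmul (b' i) (c i))))).
        2:{ intros i Hi. rewrite Hbs. unfold V'. ring. }
        rewrite csum_add, csum_mul_l. fold beta.
        replace (csum n' (fun i => Cmul (b' i) (V' i j))) with C0.
        { unfold b. destruct (Nat.eq_dec i0 i0); [ring|congruence]. }
        destruct (Nat.eq_dec j m) as [->|].
        -- symmetry. apply csum_zero. intros i Hi. unfold V', c, Cdiv. field. exact Hp.
        -- symmetry. apply Hk; lia.
Qed.

Definition Zd_eq_dec {d} (a b : Zd d) : {a = b} + {a <> b}.
Proof.
  destruct a as [k1 h1], b as [k2 h2].
  destruct (list_eq_dec Z.eq_dec k1 k2) as [e|n].
  - subst. left. f_equal. apply (UIP_dec Nat.eq_dec).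
  - right. intro H. inversion H. auto.
Defined.

Lemma fsum_le_support {d} (f : Zd d -> R) l T :
  (forall a, 0 <= f a) -> NoDup l -> NoDup T ->
  (forall k, In k l -> ~ In k T -> f k = 0) -> fsum f l <= fsum f T.
Proof.
  revert T; induction l as [|a l IH]; intros T Hf Hl HT Hs; simpl.
  - apply fsum_nonneg; auto.
  - inversion Hl; subst.
    destruct (in_dec Zd_eq_dec a T) as [Hin|Hnin].
    + destruct (in_split _ _ Hin) as [T1 [T2 ->]].
      rewrite fsum_app. simpl.
      assert (Hle : fsum f l <= fsum f (T1 ++ T2)).
      { apply IH; auto. eapply NoDup_remove_1; eauto.
        intros k Hk Hn. apply Hs; simpl; auto. intro H'. apply in_app_or in H'.
        destruct H' as [H'|[H'|H']]; subst; auto; apply Hn; apply in_or_app; auto. }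
      rewrite fsum_app in Hle. lra.
    + rewrite Hs by (simpl; auto).
      assert (fsum f l <= fsum f T) by (apply IH; auto; intros; apply Hs; simpl; auto). lra.
Qed.

Definition evec {d} (k : Zd d) : vec d := fun j => if Zd_eq_dec j k then Cone else C0.

Definition toZd (d : nat) (k : list Z) : Zd d :=
  match Nat.eq_dec (length k) d with
  | left e => exist _ k e
  | right _ => exist _ (repeat 0%Z d) (repeat_length 0%Z d)
  end.

Lemma toZd_val d k : length k = d -> proj1_sig (toZd d k) = k.
Proof. intros H. unfold toZd. destruct Nat.eq_dec; simpl; auto. contradiction. Qed.

Lemma toZd_proj d (k : Zd d) : toZd d (proj1_sig k) = k.
Proof.
  destruct k as [k e]. unfold toZd. simpl. destruct Nat.eq_dec; [|contradiction].
  f_equal. apply UIP_dec, Nat.eq_dec.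
Qed.

Lemma toZd_NoDup d L : NoDup L -> (forall k, In k L -> length k = d) -> NoDup (map (toZd d) L).
Proof.
  intros HN HL. apply NoDup_map_NoDup_ForallPairs; auto. intros a b Ha Hb He.
  rewrite <- (toZd_val d a), <- (toZd_val d b), He by auto. reflexivity.
Qed.

Lemma rpow0_nonneg t p : 0 <= rpow0 t p.
Proof. unfold rpow0. destruct Req_EM_T; [lra|]. left; apply exp_pos. Qed.

Lemma rpow0_le a b p : 0 <= a <= b -> 0 <= p -> rpow0 a p <= rpow0 b p.
Proof.
  intros Hab Hp. unfold rpow0.
  destruct (Req_EM_T a 0), (Req_EM_T b 0); try lra.
  - left; apply exp_pos.
  - apply Rle_Rpower_l; lra.
Qed.

Lemma rpow0_1 p : rpow0 1 p = 1.
Proof. unfold rpow0. destruct Req_EM_T; [lra|]. unfold Rpower. rewrite ln_1, Rmult_0_r, exp_0. auto. Qed.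

Definition wsum (Rs : list R) (k : list Z) : R :=
  fold_right (fun p s => rpow0 (IZR (Z.abs (fst p))) (2 * snd p) + s) 0 (combine k Rs).

Lemma weight_wsum Rs k : weight Rs k = 1 + wsum Rs k.
Proof. reflexivity. Qed.

Lemma wsum_cons r Rs z k : wsum (r :: Rs) (z :: k) = rpow0 (IZR (Z.abs z)) (2 * r) + wsum Rs k.
Proof. reflexivity. Qed.

Lemma wsum_nonneg Rs k : 0 <= wsum Rs k.
Proof.
  unfold wsum. generalize (combine k Rs). induction l; simpl; [lra|].
  pose proof (rpow0_nonneg (IZR (Z.abs (fst a))) (2 * snd a)). lra.
Qed.

Lemma weight_ge1 Rs k : 1 <= weight Rs k.
Proof. rewrite weight_wsum. pose proof (wsum_nonneg Rs k). lra. Qed.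

Lemma W_term_nonneg Rs {d} (x : vec d) k : 0 <= weight Rs (proj1_sig k) * Cnorm2 (x k).
Proof. pose proof (weight_ge1 Rs (proj1_sig k)). pose proof (Cnorm2_nonneg (x k)). nra. Qed.

Lemma W_partial_supported Rs {d} (x : vec d) l T : NoDup l -> NoDup T ->
  (forall k, ~ In k T -> x k = C0) -> W_partial Rs x l <= W_partial Rs x T.
Proof.
  intros Hl HT Hx. apply fsum_le_support; auto.
  - intros; apply W_term_nonneg.
  - intros k _ Hk. rewrite Hx, Cnorm2_C0 by auto. ring.
Qed.

Lemma L2_partial_supported {d} (x : vec d) l T : NoDup l -> NoDup T ->
  (forall k, ~ In k T -> x k = C0) -> L2_partial x l <= L2_partial x T.
Proof.
  intros Hl HT Hx. apply fsum_le_support; auto.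
  - intros; apply Cnorm2_nonneg.
  - intros k _ Hk. rewrite Hx by auto. apply Cnorm2_C0.
Qed.

Lemma in_W_supported Rs d (x : vec d) T : NoDup T -> (forall k, ~ In k T -> x k = C0) ->
  in_W Rs d x.
Proof. intros HT Hx. exists (W_partial Rs x T). intros l Hl. apply W_partial_supported; auto. Qed.

Lemma in_L2_supported d (x : vec d) T : NoDup T -> (forall k, ~ In k T -> x k = C0) ->
  in_L2 d x.
Proof. intros HT Hx. exists (L2_partial x T). intros l Hl. apply L2_partial_supported; auto. Qed.

Lemma L2_norm_is_supported d (x : vec d) T : NoDup T -> (forall k, ~ In k T -> x k = C0) ->
  L2_norm_is d x (sqrt (L2_partial x T)).
Proof.
  intros HT Hx.
  assert (HT0 : 0 <= L2_partial x T) by (apply fsum_nonneg; intros; apply Cnorm2_nonneg).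
  split; [apply sqrt_pos|]. rewrite sqrt_sqrt by auto. split.
  - intros y [l [Hl ->]]. apply L2_partial_supported; auto.
  - intros b Hb. apply Hb. exists T. auto.
Qed.

Lemma evec_supported {d} (k j : Zd d) : ~ In j [k] -> evec k j = C0.
Proof. intros H. unfold evec. destruct (Zd_eq_dec j k); [subst; elim H; simpl|]; auto. Qed.

Lemma in_W_vadd Rs d x y : in_W Rs d x -> in_W Rs d y -> in_W Rs d (vadd x y).
Proof.
  intros [M1 H1] [M2 H2]. exists (2 * M1 + 2 * M2). intros l Hl.
  specialize (H1 l Hl). specialize (H2 l Hl). unfold W_partial in *.
  apply Rle_trans with (fsum (fun k => 2 * (weight Rs (proj1_sig k) * Cnorm2 (x k))
                                   + 2 * (weight Rs (proj1_sig k) * Cnorm2 (y k))) l).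
  - apply fsum_le. intros a _. unfold vadd.
    pose proof (Cnorm2_add_le (x a) (y a)). pose proof (weight_ge1 Rs (proj1_sig a)). nra.
  - rewrite fsum_plus, !fsum_scal. lra.
Qed.

Lemma in_W_vscale Rs d c x : in_W Rs d x -> in_W Rs d (vscale c x).
Proof.
  intros [M H]. exists (Cnorm2 c * M). intros l Hl. specialize (H l Hl). unfold W_partial in *.
  rewrite (fsum_ext _ (fun k => Cnorm2 c * (weight Rs (proj1_sig k) * Cnorm2 (x k)))).
  - rewrite fsum_scal. pose proof (Cnorm2_nonneg c). nra.
  - intros a _. unfold vscale. rewrite Cnorm2_mul. ring.
Qed.

Lemma in_W_lincomb Rs d cs xs : Forall (in_W Rs d) xs -> in_W Rs d (lincomb cs xs).
Proof.
  revert xs; induction cs as [|c cs IH]; intros [|x xs] HF; simpl;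
    try (apply (in_W_supported _ _ _ [] (NoDup_nil _)); reflexivity).
  inversion HF; subst. apply in_W_vadd; [apply in_W_vscale|apply IH]; auto.
Qed.

Lemma W_partial_vscale Rs {d} c (x : vec d) l :
  W_partial Rs (vscale c x) l = Cnorm2 c * W_partial Rs x l.
Proof.
  unfold W_partial. rewrite <- fsum_scal. apply fsum_ext. intros k _.
  unfold vscale. rewrite Cnorm2_mul. ring.
Qed.

Lemma lincomb_eval {d} (cs : list CC) (ys : list (vec d)) j : length cs = length ys ->
  lincomb cs ys j = csum (length ys) (fun i => Cmul (nth i cs C0) (nth i ys vzero j)).
Proof.
  revert ys; induction cs as [|c cs IH]; intros [|y ys] Hl; try (simpl in Hl; lia).
  - reflexivity.
  - change (length (y :: ys)) with (S (length ys)).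
    rewrite csum_shift. simpl. unfold lincomb in IH. rewrite <- IH by (simpl in Hl; lia).
    reflexivity.
Qed.

Lemma linear_vzero Rs d A : linear_on Rs d A -> A vzero = vzero.
Proof.
  intros [_ [_ Hs]].
  assert (E : vzero = vscale C0 (@vzero d)).
  { apply functional_extensionality; intro k. unfold vscale, vzero. ring. }
  rewrite E, Hs by (apply (in_W_supported _ _ _ [] (NoDup_nil _)); reflexivity).
  apply functional_extensionality; intro k. unfold vscale, vzero. ring.
Qed.

Lemma linear_lincomb Rs d A cs xs : linear_on Rs d A -> Forall (in_W Rs d) xs ->
  A (lincomb cs xs) = lincomb cs (map A xs).
Proof.
  intros HA. revert xs; induction cs as [|c cs IH]; intros [|x xs] HF; simpl;
    try apply (linear_vzero _ _ _ HA).
  inversion HF; subst. destruct HA as [_ [Ha Hs]].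
  change (A (vadd (vscale c x) (lincomb cs xs)) = vadd (vscale c (A x)) (lincomb cs (map A xs))).
  rewrite Ha, Hs, IH by (auto using in_W_vscale, in_W_lincomb). reflexivity.
Qed.

Lemma lincomb_evec_notin {d} (cs : list CC) (S : list (Zd d)) k :
  ~ In k S -> lincomb cs (map evec S) k = C0.
Proof.
  revert cs; induction S as [|a S IH]; intros [|c cs] Hk; try reflexivity.
  change (Cadd (Cmul c (evec a k)) (lincomb cs (map evec S) k) = C0).
  rewrite IH by (simpl in Hk; tauto). unfold evec.
  destruct (Zd_eq_dec k a); [subst; simpl in Hk; tauto|]. ring.
Qed.

Lemma lincomb_evec_nth {d} (cs : list CC) (S : list (Zd d)) k0 i :
  NoDup S -> length cs = length S -> (i < length S)%nat ->
  lincomb cs (map evec S) (nth i S k0) = nth i cs C0.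
Proof.
  revert cs i; induction S as [|a S IH]; intros [|c cs] i HS Hl Hi; simpl in *; try lia.
  inversion HS as [|? ? Ha HS']; subst.
  change (Cadd (Cmul c (evec a (nth i (a :: S) k0))) (lincomb cs (map evec S) (nth i (a :: S) k0))
          = nth i (c :: cs) C0).
  destruct i as [|i]; simpl.
  - rewrite lincomb_evec_notin by auto. unfold evec. destruct Zd_eq_dec; [ring|congruence].
  - rewrite IH by (auto; lia). unfold evec. destruct Zd_eq_dec as [e|]; [|ring].
    exfalso. apply Ha. rewrite <- e. apply nth_In. lia.
Qed.

Lemma lincomb_app_zeros {d} (cs : list CC) (ys : list (vec d)) m : length cs = length ys ->
  lincomb (cs ++ repeat C0 m) (ys ++ repeat vzero m) = lincomb cs ys.
Proof.
  revert ys; induction cs as [|c cs IH]; intros [|y ys] Hl; simpl in Hl; try lia.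
  - simpl. induction m as [|m IHm]; [reflexivity|].
    change (vadd (vscale C0 vzero) (lincomb (repeat C0 m) (repeat (@vzero d) m)) = vzero).
    rewrite IHm. apply functional_extensionality; intro k. cbn. unfold vadd, vscale, vzero. ring.
  - change (vadd (vscale c y) (lincomb (cs ++ repeat C0 m) (ys ++ repeat vzero m))
            = vadd (vscale c y) (lincomb cs ys)).
    rewrite IH by lia. reflexivity.
Qed.

(** * Approximation numbers of the diagonal embedding *)

Definition projS {d} (S : list (Zd d)) (x : vec d) : vec d :=
  fun k => if in_dec Zd_eq_dec k S then x k else C0.

Lemma projS_lincomb {d} (S : list (Zd d)) x : NoDup S ->
  projS S x = lincomb (map x S) (map evec S).
Proof.
  intros HS. apply functional_extensionality; intro k. unfold projS.
  destruct (in_dec Zd_eq_dec k S) as [Hk|Hk].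
  - destruct (In_nth S k k Hk) as [i [Hi <-]].
    rewrite lincomb_evec_nth by (rewrite ?length_map; auto).
    symmetry. apply nth_map_indep. auto.
  - symmetry. apply lincomb_evec_notin. auto.
Qed.

Lemma projS_linear Rs d (S : list (Zd d)) : NoDup S -> linear_on Rs d (projS S).
Proof.
  intros HS. split; [|split].
  - intros x _. apply (in_L2_supported _ _ S HS).
    intros k Hk. unfold projS. destruct in_dec; [contradiction|reflexivity].
  - intros x y _ _. apply functional_extensionality; intro k. unfold projS, vadd.
    destruct in_dec; [reflexivity|]. unfold Cadd, C0; simpl; f_equal; ring.
  - intros c x _. apply functional_extensionality; intro k. unfold projS, vscale.
    destruct in_dec; [reflexivity|]. unfold Cmul, C0; simpl; f_equal; ring.
Qed.

Lemma projS_rank_lt Rs d n (S : list (Zd d)) : NoDup S -> (length S <= n - 1)%nat ->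
  rank_lt Rs d (projS S) n.
Proof.
  intros HS HSl. set (m := (n - 1 - length S)%nat).
  exists (map evec S ++ repeat vzero m). split; [|split].
  - rewrite length_app, length_map, repeat_length. unfold m; lia.
  - apply Forall_app. split; apply Forall_forall; intros y Hy.
    + apply in_map_iff in Hy. destruct Hy as [k [<- _]].
      apply (in_L2_supported _ _ [k]); [repeat constructor; simpl; tauto|].
      intros j Hj. apply evec_supported; auto.
    + apply repeat_spec in Hy. subst. apply (in_L2_supported _ _ [] (NoDup_nil _)). reflexivity.
  - intros x _. exists (map x S ++ repeat C0 m). split.
    + rewrite !length_app, !length_map, !repeat_length. reflexivity.
    + rewrite lincomb_app_zeros by (rewrite !length_map; reflexivity).
      apply projS_lincomb; auto.
Qed.

Lemma projS_error_le Rs d (S : list (Zd d)) t x r : 0 < t ->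
  (forall k, ~ In k S -> t <= weight Rs (proj1_sig k)) ->
  W_unit_ball Rs d x -> L2_norm_is d (vsub x (projS S x)) r -> r <= / sqrt t.
Proof.
  intros Ht Hw Hb [Hr0 Hr].
  assert (Hrr : r * r <= / t).
  { apply (proj2 Hr). intros y [l [Hl ->]]. unfold L2_partial.
    apply Rle_trans with (fsum (fun k => / t * (weight Rs (proj1_sig k) * Cnorm2 (x k))) l).
    - apply fsum_le. intros k _. pose proof (W_term_nonneg Rs x k).
      pose proof (Rinv_0_lt_compat t Ht). unfold vsub, projS.
      destruct in_dec as [Hk|Hk].
      + replace (Cadd (x k) (Copp (x k))) with C0 by ring. rewrite Cnorm2_C0. nra.
      + replace (Cadd (x k) (Copp C0)) with (x k) by ring.
        specialize (Hw k Hk). pose proof (Cnorm2_nonneg (x k)).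
        apply Rle_trans with (/ t * (t * Cnorm2 (x k))); [right; field; lra|].
        apply Rmult_le_compat_l; nra.
    - rewrite fsum_scal. specialize (Hb l Hl). pose proof (Rinv_0_lt_compat t Ht).
      unfold W_partial in Hb. nra. }
  rewrite <- sqrt_inv, <- (sqrt_square r) by auto. apply sqrt_le_1_alt. lra.
Qed.

Lemma projS_op_norm_le Rs d (S : list (Zd d)) t : 0 < t ->
  (forall k, ~ In k S -> t <= weight Rs (proj1_sig k)) ->
  exists s, op_norm_diff_is Rs d (projS S) s /\ s <= / sqrt t.
Proof.
  intros Ht Hw.
  set (E := fun r => exists x, W_unit_ball Rs d x /\ L2_norm_is d (vsub x (projS S x)) r).
  assert (Hbnd : forall r, E r -> r <= / sqrt t).
  { intros r [x [Hb Hr]]. eapply projS_error_le; eauto. }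
  destruct (completeness E) as [s Hs].
  - exists (/ sqrt t). exact Hbnd.
  - exists 0, vzero. split.
    + intros l _. unfold W_partial. rewrite fsum_zero; [lra|].
      intros. unfold vzero. rewrite Cnorm2_C0; ring.
    + replace (vsub vzero (projS S vzero)) with (@vzero d).
      * replace 0 with (sqrt (L2_partial (@vzero d) [])) by (simpl; apply sqrt_0).
        apply L2_norm_is_supported; [constructor|reflexivity].
      * apply functional_extensionality; intro k. unfold vsub, projS, vzero.
        destruct in_dec; ring.
  - exists s. split; [exact Hs|]. apply (proj2 Hs). exact Hbnd.
Qed.

(* The [n] images [A e_k], [k] in [T], lie in the span of [n - 1] vectors. *)
Lemma rank_lt_kernel Rs d n (T : list (Zd d)) A : (1 <= n)%nat -> length T = n ->
  linear_on Rs d A -> rank_lt Rs d A n ->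
  exists b : nat -> CC, (exists i, (i < n)%nat /\ b i <> C0) /\
    A (lincomb (map b (seq 0 n)) (map evec T)) = vzero.
Proof.
  intros Hn HTl HA [ys [Hys [_ Hspan]]].
  set (k0 := toZd d []).
  set (Tn := fun i => nth i T k0).
  assert (HeW : forall k : Zd d, in_W Rs d (evec k)).
  { intros k. apply (in_W_supported _ _ _ [k]); [repeat constructor; simpl; tauto|].
    intros j Hj. apply evec_supported; auto. }
  destruct (fin_choice [] n (fun i cs => length cs = length ys /\ A (evec (Tn i)) = lincomb cs ys))
    as [css Hcss]; [intros i Hi; apply Hspan, HeW|].
  set (V := fun i j => nth j (css i) C0).
  destruct (homogeneous_system_nontrivial (n - 1) n V) as [b [Hb Hker]]; [lia|].
  exists b. split; [exact Hb|].
  rewrite (linear_lincomb Rs d A _ _ HA) by (apply Forall_forall; intros x Hx;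
    apply in_map_iff in Hx; destruct Hx as [k [<- _]]; apply HeW).
  apply functional_extensionality; intro j.
  rewrite lincomb_eval by (rewrite !length_map, length_seq; auto).
  rewrite !length_map, HTl.
  rewrite (csum_ext n _ (fun i => csum (n - 1) (fun l => Cmul (Cmul (b i) (V i l)) (nth l ys vzero j)))).
  2:{ intros i Hi.
      rewrite (nth_map_indep _ _ _ O), seq_nth by (rewrite ?length_seq; lia). simpl.
      rewrite (nth_map_indep A _ _ (evec k0)), (nth_map_indep evec _ _ k0)
        by (rewrite ?length_map; lia).
      fold (Tn i).
      destruct (Hcss i Hi) as [Hl ->]. rewrite lincomb_eval, Hys, <- csum_mul_l by auto.
      apply csum_ext; intros; unfold V; ring. }
  rewrite csum_swap. apply csum_zero. intros l Hl.
  rewrite (csum_ext n _ (fun i => Cmul (nth l ys vzero j) (Cmul (b i) (V i l)))) by (intros; ring).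
  rewrite csum_mul_l, Hker by lia. unfold vzero. ring.
Qed.

(* Normalized, the kernel vector of [rank_lt_kernel] lies in the unit ball of W, is fixed
   by [I - A], and has L2 norm at least [1 / sqrt tau]. *)
Lemma approx_error_lower Rs d n (T : list (Zd d)) tau A s :
  (1 <= n)%nat -> NoDup T -> length T = n -> 0 < tau ->
  (forall k, In k T -> weight Rs (proj1_sig k) <= tau) ->
  linear_on Rs d A -> rank_lt Rs d A n -> op_norm_diff_is Rs d A s -> / sqrt tau <= s.
Proof.
  intros Hn HT HTl Htau Hw HA HR Hs.
  destruct (rank_lt_kernel Rs d n T A Hn HTl HA HR) as [b [[i1 [Hi1 Hb1]] HAx0]].
  set (x0 := lincomb (map b (seq 0 n)) (map evec T)) in HAx0.
  assert (Hx0T : forall k, ~ In k T -> x0 k = C0) by (intros; apply lincomb_evec_notin; auto).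
  set (N := W_partial Rs x0 T).
  assert (HN : 0 < N).
  { apply (fsum_pos _ _ (nth i1 T (toZd d []))); [intros; apply W_term_nonneg| apply nth_In; lia|].
    unfold x0. rewrite lincomb_evec_nth by (rewrite ?length_map, ?length_seq; auto; lia).
    rewrite (nth_map_indep _ _ _ O), seq_nth by (rewrite ?length_seq; lia). simpl.
    pose proof (weight_ge1 Rs (proj1_sig (nth i1 T (toZd d [])))). pose proof (Cnorm2_pos _ Hb1). nra. }
  set (x := vscale (/ sqrt N, 0) x0).
  assert (HxT : forall k, ~ In k T -> x k = C0).
  { intros k Hk. unfold x, vscale. rewrite Hx0T by auto. ring. }
  assert (HAx : A x = vzero).
  { destruct HA as [_ [_ Hsc]]. unfold x. rewrite Hsc, HAx0 by (apply (in_W_supported _ _ _ T); auto).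
    apply functional_extensionality; intro k. unfold vscale, vzero. ring. }
  assert (HWx : W_partial Rs x T = 1).
  { unfold x. rewrite W_partial_vscale. fold N. unfold Cnorm2; simpl.
    rewrite <- Rinv_mult, sqrt_sqrt by lra. field. lra. }
  assert (Hball : W_unit_ball Rs d x).
  { intros l Hl. rewrite <- HWx. apply W_partial_supported; auto. }
  assert (Hsub : vsub x (A x) = x).
  { rewrite HAx. apply functional_extensionality; intro k. unfold vsub, vzero. ring. }
  assert (HL2 : / tau <= L2_partial x T).
  { rewrite <- (Rmult_1_r (/ tau)), <- HWx. unfold W_partial, L2_partial.
    rewrite <- fsum_scal. apply fsum_le. intros k Hk.
    specialize (Hw k Hk). pose proof (Cnorm2_nonneg (x k)).
    apply Rle_trans with (/ tau * (tau * Cnorm2 (x k))); [|right; field; lra].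
    apply Rmult_le_compat_l; [left; apply Rinv_0_lt_compat|]; nra. }
  apply Rle_trans with (sqrt (L2_partial x T)).
  - rewrite <- sqrt_inv. apply sqrt_le_1_alt. exact HL2.
  - apply (proj1 Hs). exists x. split; [exact Hball|].
    rewrite Hsub. apply L2_norm_is_supported; auto.
Qed.

(* [few_weights_below Rs d n t]: the [n]-th smallest weight is at least [t];
   [many_weights_upto Rs d n tau]: it is at most [tau]. *)
Definition few_weights_below (Rs : list R) (d n : nat) (t : R) : Prop :=
  exists S : list (Zd d), NoDup S /\ (length S <= n - 1)%nat /\
    forall k, ~ In k S -> t <= weight Rs (proj1_sig k).

Definition many_weights_upto (Rs : list R) (d n : nat) (tau : R) : Prop :=
  exists T : list (Zd d), NoDup T /\ (n <= length T)%nat /\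
    forall k, In k T -> weight Rs (proj1_sig k) <= tau.

Lemma few_weights_below_mono Rs d n n' t : (n <= n')%nat ->
  few_weights_below Rs d n t -> few_weights_below Rs d n' t.
Proof. intros Hn [S [HS [HSl Hw]]]. exists S. repeat split; auto. lia. Qed.

Lemma many_weights_upto_mono Rs d n tau tau' :
  many_weights_upto Rs d n tau -> tau <= tau' -> many_weights_upto Rs d n tau'.
Proof.
  intros [T [HT [HTl Hw]]] Htau. exists T. repeat split; auto.
  intros k Hk. specialize (Hw k Hk). lra.
Qed.

Lemma approx_number_between Rs d n t tau : (1 <= n)%nat -> 0 < t -> 0 < tau ->
  few_weights_below Rs d n t -> many_weights_upto Rs d n tau ->
  exists a, approx_number_is Rs d n a /\ / sqrt tau <= a <= / sqrt t.
Proof.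
  intros Hn Ht Htau [S [HS [HSl Hw]]] [T [HT [HTl HwT]]].
  destruct (projS_op_norm_le Rs d S t Ht Hw) as [s0 [Hs0 Hs0t]].
  set (E := fun s => exists A : vec d -> vec d,
             linear_on Rs d A /\ rank_lt Rs d A n /\ op_norm_diff_is Rs d A s).
  assert (HE0 : E s0) by (exists (projS S); auto using projS_linear, projS_rank_lt).
  assert (Hlow : forall s, E s -> / sqrt tau <= s).
  { intros s [A [HA [HR HO]]].
    apply (approx_error_lower Rs d n (firstn n T) tau A s); auto.
    - rewrite <- (firstn_skipn n T) in HT. eapply NoDup_app_remove_r; eauto.
    - rewrite length_firstn. lia.
    - intros k Hk. apply HwT. rewrite <- (firstn_skipn n T). apply in_or_app. auto. }
  destruct (completeness (fun y => E (- y))) as [m Hm].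
  { exists (- / sqrt tau). intros y Hy. apply Hlow in Hy. lra. }
  { exists (- s0). red. rewrite Ropp_involutive. exact HE0. }
  assert (Hup : forall s, E s -> - s <= m).
  { intros s Hs. apply (proj1 Hm). red. rewrite Ropp_involutive. exact Hs. }
  exists (- m). split; [split|split].
  - intros x Hx. specialize (Hup x Hx). lra.
  - intros b Hb. assert (m <= - b); [|lra].
    apply (proj2 Hm). intros y Hy. apply Hb in Hy. lra.
  - assert (m <= - / sqrt tau); [|lra].
    apply (proj2 Hm). intros y Hy. apply Hlow in Hy. lra.
  - specialize (Hup s0 HE0). lra.
Qed.

Lemma approx_number_within Rs d n t tau c C ph :
  (1 <= n)%nat -> 0 < t -> 0 < tau -> 0 <= c -> 0 <= C -> 0 <= ph ->
  few_weights_below Rs d n t -> many_weights_upto Rs d n tau ->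
  c * c * (ph * ph) * tau <= 1 -> 1 <= C * C * (ph * ph) * t ->
  exists a, approx_number_is Rs d n a /\ c * ph <= a <= C * ph.
Proof.
  intros Hn Ht Htau Hc HC Hph Hfew Hmany Hlow Hup.
  destruct (approx_number_between Rs d n t tau Hn Ht Htau Hfew Hmany) as [a [Ha [Ha1 Ha2]]].
  exists a. split; [exact Ha|split].
  - eapply Rle_trans; [|exact Ha1].
    rewrite <- sqrt_inv, <- (sqrt_square (c * ph)) by nra. apply sqrt_le_1_alt.
    apply Rmult_le_reg_r with tau; auto. rewrite Rinv_l by lra. nra.
  - eapply Rle_trans; [exact Ha2|].
    rewrite <- sqrt_inv, <- (sqrt_square (C * ph)) by nra. apply sqrt_le_1_alt.
    apply Rmult_le_reg_r with t; auto. rewrite Rinv_l by lra. nra.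
Qed.

(** * Sets of frequencies with small weight *)

Definition l1norm (k : list Z) : R := fold_right (fun z s => IZR (Z.abs z) + s) 0 k.

Lemma l1norm_app a c : l1norm (a ++ c) = l1norm a + l1norm c.
Proof. induction a; simpl; [|unfold l1norm in *; simpl; rewrite IHa]; ring. Qed.

Lemma l1norm_nonneg k : 0 <= l1norm k.
Proof.
  induction k; unfold l1norm in *; simpl; [lra|].
  assert (0 <= IZR (Z.abs a)) by (apply IZR_le; lia). lra.
Qed.

Lemma wsum_le_l1norm Rs k : (forall z, In z k -> (Z.abs z <= 1)%Z) -> wsum Rs k <= l1norm k.
Proof.
  revert Rs; induction k as [|z k IH]; intros Rs H; destruct Rs as [|r Rs].
  - unfold wsum; simpl; lra.
  - unfold wsum; simpl; lra.
  - unfold wsum; simpl. pose proof (l1norm_nonneg (z :: k)). auto.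
  - rewrite wsum_cons. unfold l1norm; simpl; fold (l1norm k).
    assert (wsum Rs k <= l1norm k) by (apply IH; intros; apply H; simpl; auto).
    assert (rpow0 (IZR (Z.abs z)) (2 * r) <= IZR (Z.abs z)); [|lra].
    assert (Hz : (Z.abs z = 0 \/ Z.abs z = 1)%Z) by (specialize (H z (or_introl eq_refl)); lia).
    destruct Hz as [-> | ->].
    + unfold rpow0. destruct Req_EM_T; lra.
    + rewrite rpow0_1. lra.
Qed.

Definition zinterval (K : nat) : list Z :=
  0%Z :: flat_map (fun i => [Z.of_nat (S i); (- Z.of_nat (S i))%Z]) (seq 0 K).

Lemma zinterval_In K z : In z (zinterval K) <-> (Z.abs z <= Z.of_nat K)%Z.
Proof.
  unfold zinterval. split.
  - intros [H|H]; [subst; simpl; lia|].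
    apply in_flat_map in H. destruct H as [i [Hi H]]. apply in_seq in Hi.
    simpl in H. destruct H as [H|[H|[]]]; subst; lia.
  - intros H. destruct (Z.eq_dec z 0); [left; auto|right].
    apply in_flat_map. exists (pred (Z.to_nat (Z.abs z))). split.
    + apply in_seq. lia.
    + simpl. destruct (Z_le_gt_dec 0 z); [left|right; left]; lia.
Qed.

Lemma zinterval_NoDup K : NoDup (zinterval K).
Proof.
  unfold zinterval. constructor.
  - intro H. apply in_flat_map in H. destruct H as [i [_ H]]. simpl in H. lia.
  - induction K; [constructor|].
    rewrite seq_S, flat_map_app. apply NoDup_app; auto.
    + simpl. repeat constructor; simpl; lia.
    + intros a Ha Hb. apply in_flat_map in Ha. destruct Ha as [i [Hi Ha]]. apply in_seq in Hi.
      simpl in Hb, Ha. lia.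
Qed.

Lemma zinterval_length K : length (zinterval K) = (2 * K + 1)%nat.
Proof.
  unfold zinterval. cbn [length]. induction K; [reflexivity|].
  rewrite seq_S, flat_map_app, length_app. simpl length at 2. lia.
Qed.

Fixpoint box (Ks : list nat) : list (list Z) :=
  match Ks with
  | [] => [[]]
  | K :: Ks => flat_map (fun z => map (cons z) (box Ks)) (zinterval K)
  end.

Lemma box_In Ks k : In k (box Ks) <-> Forall2 (fun z K => (Z.abs z <= Z.of_nat K)%Z) k Ks.
Proof.
  revert k; induction Ks as [|K Ks IH]; intros k; cbn [box].
  - split; [intros [<-|[]]; constructor|intros H; inversion H; simpl; auto].
  - rewrite in_flat_map. split.
    + intros [z [Hz H]]. apply in_map_iff in H. destruct H as [r [<- Hr]].
      constructor; [apply zinterval_In|apply IH]; auto.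
    + intros H. inversion H; subst. exists x. split; [apply zinterval_In; auto|].
      apply in_map, IH; auto.
Qed.

Lemma box_NoDup Ks : NoDup (box Ks).
Proof.
  induction Ks; cbn [box]; [repeat constructor; simpl; tauto|].
  apply NoDup_flat_map_map; auto using zinterval_NoDup.
  intros x1 x2 y1 y2 _ _ _ _ H. inversion H; auto.
Qed.

Definition box_card (Ks : list nat) : nat := fold_right (fun K p => ((2 * K + 1) * p)%nat) 1%nat Ks.

Lemma box_length Ks : length (box Ks) = box_card Ks.
Proof.
  induction Ks; cbn [box box_card fold_right];
    [|rewrite length_flat_map_map, zinterval_length, IHKs]; auto.
Qed.

Lemma box_elem_length Ks k : In k (box Ks) -> length k = length Ks.
Proof. intros H. apply box_In in H. eapply Forall2_length; eauto. Qed.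

Lemma wsum_box_le Rs Ks k : Forall2 (fun z K => (Z.abs z <= Z.of_nat K)%Z) k Ks ->
  (forall r, In r Rs -> 0 <= r) ->
  wsum Rs k <= fold_right (fun p s => rpow0 (INR (fst p)) (2 * snd p) + s) 0 (combine Ks Rs).
Proof.
  intros HF. revert Rs. induction HF as [|z K k Ks Hz HF IH]; intros Rs Hr.
  - unfold wsum; simpl; lra.
  - destruct Rs as [|r Rs]; [unfold wsum; simpl; lra|].
    rewrite wsum_cons. simpl.
    assert (wsum Rs k <= fold_right (fun p s => rpow0 (INR (fst p)) (2 * snd p) + s) 0 (combine Ks Rs))
      by (apply IH; intros; apply Hr; simpl; auto).
    assert (rpow0 (IZR (Z.abs z)) (2 * r) <= rpow0 (INR K) (2 * r)); [|lra].
    assert (0 <= r) by (apply Hr; simpl; auto).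
    apply rpow0_le; [|lra]. rewrite INR_IZR_INZ. split; apply IZR_le; lia.
Qed.

Lemma low_weight_box Rs d n Ks : length Ks = d -> (n <= box_card Ks)%nat ->
  (forall r, In r Rs -> 0 <= r) ->
  many_weights_upto Rs d n
    (1 + fold_right (fun p s => rpow0 (INR (fst p)) (2 * snd p) + s) 0 (combine Ks Rs)).
Proof.
  intros HKs Hn HR. exists (map (toZd d) (box Ks)). split; [|split].
  - apply toZd_NoDup; [apply box_NoDup|]. intros k Hk. rewrite (box_elem_length _ _ Hk). auto.
  - rewrite length_map, box_length. exact Hn.
  - intros k Hk. apply in_map_iff in Hk. destruct Hk as [k0 [<- Hk0]].
    rewrite toZd_val by (rewrite (box_elem_length _ _ Hk0); auto).
    rewrite weight_wsum. apply box_In in Hk0. pose proof (wsum_box_le Rs Ks k0 Hk0 HR). lra.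
Qed.

Lemma low_weight_cube Rs d n : length Rs = d -> (n <= 3 ^ d)%nat ->
  (forall r, In r Rs -> 0 <= r) -> many_weights_upto Rs d n (1 + INR d).
Proof.
  intros Hd Hn HR. destruct (low_weight_box Rs d n (repeat 1%nat d)) as [T [H1 [H2 H3]]];
    auto using repeat_length.
  { replace (box_card (repeat 1%nat d)) with (3 ^ d)%nat; auto.
    clear. induction d; simpl; [|rewrite <- IHd]; lia. }
  exists T. split; [auto|split; auto].
  - intros k Hk. specialize (H3 k Hk).
    replace (INR d) with (fold_right (fun p s => rpow0 (INR (fst p)) (2 * snd p) + s) 0
                            (combine (repeat 1%nat d) Rs)); auto.
    subst d. clear. induction Rs; simpl; [reflexivity|]. rewrite IHRs, rpow0_1.
    destruct (length Rs); simpl; ring.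
Qed.

Definition unit_row (b i : nat) : list Z := map (fun j => if Nat.eqb j i then 1%Z else 0%Z) (seq 0 b).

Lemma unit_row_length b i : length (unit_row b i) = b.
Proof. unfold unit_row. rewrite length_map, length_seq. auto. Qed.

Lemma unit_row_entries b i z : In z (unit_row b i) -> (Z.abs z <= 1)%Z.
Proof.
  unfold unit_row. intros H. apply in_map_iff in H. destruct H as [j [<- _]]. destruct Nat.eqb; lia.
Qed.

Lemma unit_row_l1norm b i : (i < b)%nat -> l1norm (unit_row b i) = 1.
Proof.
  unfold unit_row. intros Hi. replace b with (i + (1 + (b - i - 1)))%nat by lia.
  rewrite !seq_app, !map_app, !l1norm_app. simpl.
  rewrite Nat.eqb_refl. unfold l1norm at 2. simpl.
  assert (Hz : forall s c, (forall j, In j (seq s c) -> j <> i) ->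
            l1norm (map (fun j => if Nat.eqb j i then 1%Z else 0%Z) (seq s c)) = 0).
  { intros s c H. induction (seq s c) as [|j l IH]; [reflexivity|].
    unfold l1norm in *; simpl. destruct (Nat.eqb_spec j i) as [e|]; [exfalso; apply (H j); simpl; auto|].
    rewrite IH by (intros; apply H; simpl; auto). simpl. ring. }
  rewrite !Hz; [ring| |]; intros j Hj; apply in_seq in Hj; lia.
Qed.

Lemma unit_row_inj b i i' : (i < b)%nat -> (i' < b)%nat -> unit_row b i = unit_row b i' -> i = i'.
Proof.
  intros Hi Hi' H. assert (E : nth i (unit_row b i) 0%Z = nth i (unit_row b i') 0%Z) by (rewrite H; auto).
  unfold unit_row in E.
  rewrite !(nth_map_indep _ _ _ O), seq_nth in E by (rewrite ?length_seq; auto). simpl in E.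
  rewrite Nat.eqb_refl in E. destruct (Nat.eqb_spec i i'); auto. discriminate.
Qed.

Fixpoint block_vectors (m b : nat) : list (list Z) :=
  match m with
  | O => [[]]
  | S m => flat_map (fun i => map (fun r => unit_row b i ++ r) (block_vectors m b)) (seq 0 b)
  end.

Lemma block_vectors_NoDup m b : NoDup (block_vectors m b).
Proof.
  induction m; simpl; [repeat constructor; simpl; tauto|].
  apply NoDup_flat_map_map; auto using seq_NoDup.
  intros x1 x2 y1 y2 H1 H2 _ _ He. apply in_seq in H1, H2.
  apply app_inj_length in He; [|rewrite !unit_row_length; auto].
  destruct He as [He ->]. split; auto. apply (unit_row_inj b); auto; lia.
Qed.

Lemma block_vectors_length m b : length (block_vectors m b) = (b ^ m)%nat.
Proof. induction m; simpl; [|rewrite length_flat_map_map, length_seq, IHm]; auto. Qed.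

Lemma block_vectors_In m b k : In k (block_vectors m b) ->
  length k = (m * b)%nat /\ (forall z, In z k -> (Z.abs z <= 1)%Z) /\ l1norm k = INR m.
Proof.
  revert k; induction m; intros k Hk; simpl in Hk.
  - destruct Hk as [<-|[]]. split; [reflexivity|split; [intros z []|reflexivity]].
  - apply in_flat_map in Hk. destruct Hk as [i [Hi Hk]]. apply in_map_iff in Hk.
    destruct Hk as [r [<- Hr]]. apply in_seq in Hi. destruct (IHm r Hr) as [H1 [H2 H3]].
    split; [|split].
    + rewrite length_app, unit_row_length, H1. lia.
    + intros z Hz. apply in_app_or in Hz. destruct Hz; [eapply unit_row_entries|]; eauto.
    + rewrite l1norm_app, H3, unit_row_l1norm, S_INR by lia. ring.
Qed.

Lemma low_weight_blocks Rs d n m b : (m * b <= d)%nat -> (n <= b ^ m)%nat ->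
  many_weights_upto Rs d n (1 + INR m).
Proof.
  intros Hmb Hn. set (pad := fun k => k ++ repeat 0%Z (d - m * b)).
  assert (Hpad : forall k, In k (block_vectors m b) ->
            length (pad k) = d /\ (forall z, In z (pad k) -> (Z.abs z <= 1)%Z) /\ l1norm (pad k) = INR m).
  { intros k Hk. destruct (block_vectors_In _ _ _ Hk) as [H1 [H2 H3]]. unfold pad. split; [|split].
    - rewrite length_app, repeat_length. lia.
    - intros z Hz. apply in_app_or in Hz. destruct Hz as [|Hz]; auto.
      apply repeat_spec in Hz. subst. simpl. lia.
    - rewrite l1norm_app, H3. cut (l1norm (repeat 0%Z (d - m * b)) = 0); [lra|].
      induction (d - m * b)%nat as [|j IHj]; unfold l1norm in *; simpl; [|rewrite IHj]; simpl; ring. }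
  exists (map (toZd d) (map pad (block_vectors m b))). split; [|split].
  - apply toZd_NoDup.
    + apply NoDup_map_NoDup_ForallPairs; [|apply block_vectors_NoDup].
      intros x y Hx Hy He. apply block_vectors_In in Hx, Hy.
      apply app_inj_length in He; [tauto|lia].
    + intros k Hk. apply in_map_iff in Hk. destruct Hk as [k0 [<- Hk0]]. apply Hpad; auto.
  - rewrite !length_map, block_vectors_length. exact Hn.
  - intros k Hk. rewrite map_map in Hk. apply in_map_iff in Hk. destruct Hk as [k0 [<- Hk0]].
    destruct (Hpad k0 Hk0) as [H1 [H2 H3]].
    rewrite toZd_val, weight_wsum by auto. pose proof (wsum_le_l1norm Rs _ H2). lra.
Qed.

(** * Counting frequencies of small weight *)

Lemma fsum_zinterval (f : Z -> R) K :
  fsum f (zinterval K) = f 0%Z + rsum K (fun i => f (Z.of_nat (S i)) + f (- Z.of_nat (S i))%Z).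
Proof.
  unfold zinterval. change (fsum f (0%Z :: ?l)) with (f 0%Z + fsum f l). f_equal.
  induction K; [reflexivity|].
  rewrite seq_S, flat_map_app, fsum_app, IHK. simpl. ring.
Qed.

Definition theta (lam : R) (K : nat) (r : R) : R :=
  fsum (fun z => exp (- lam * rpow0 (IZR (Z.abs z)) (2 * r))) (zinterval K).

Lemma theta_nonneg lam K r : 0 <= theta lam K r.
Proof. apply fsum_nonneg. intros; left; apply exp_pos. Qed.

Lemma theta_eq lam K r :
  theta lam K r = 1 + 2 * rsum K (fun i => exp (- lam * Rpower (INR (S i)) (2 * r))).
Proof.
  unfold theta. rewrite fsum_zinterval. f_equal.
  - simpl. unfold rpow0. destruct Req_EM_T; [|lra]. rewrite Rmult_0_r, exp_0. auto.
  - rewrite <- rsum_scal. apply rsum_ext. intros i _.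
    rewrite Z.abs_opp, Z.abs_eq, <- INR_IZR_INZ by lia. unfold rpow0.
    destruct Req_EM_T as [e|]; [|ring]. pose proof (pos_INR i). rewrite S_INR in e. lra.
Qed.

Lemma fsum_box_exp_wsum lam K Rs :
  fsum (fun k => exp (- lam * wsum Rs k)) (box (repeat K (length Rs))) =
  fold_right (fun r p => theta lam K r * p) 1 Rs.
Proof.
  induction Rs as [|r Rs IH]; cbn [length repeat box fold_right].
  - unfold wsum. simpl. rewrite Rmult_0_r, exp_0. ring.
  - rewrite fsum_flat_map, <- IH. unfold theta.
    rewrite Rmult_comm, <- fsum_scal. apply fsum_ext. intros z _.
    rewrite fsum_map, Rmult_comm, <- fsum_scal. apply fsum_ext. intros k _.
    rewrite wsum_cons, <- exp_plus. f_equal. ring.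
Qed.

(* Chernoff's bound: each counted frequency contributes at least 1 to the sum. *)
Lemma count_weight_lt_le Rs (L : list (list Z)) t lam : 0 <= lam ->
  INR (length (filter (fun k => if Rlt_dec (weight Rs k) t then true else false) L)) <=
  exp (lam * (t - 1)) * fsum (fun k => exp (- lam * wsum Rs k)) L.
Proof.
  intros Hl. rewrite <- fsum_scal. induction L as [|k L IH]; simpl; [lra|].
  assert (E : exp (lam * (t - 1)) * exp (- lam * wsum Rs k) = exp (lam * (t - weight Rs k))).
  { rewrite <- exp_plus, weight_wsum. f_equal. ring. }
  rewrite E. destruct (Rlt_dec (weight Rs k) t).
  - simpl length. rewrite S_INR.
    pose proof (exp_ineq1_le (lam * (t - weight Rs k))). nra.
  - pose proof (exp_pos (lam * (t - weight Rs k))). lra.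
Qed.

Lemma wsum_ge_entry Rs k z : In z k -> length k = length Rs ->
  exists r, In r Rs /\ rpow0 (IZR (Z.abs z)) (2 * r) <= wsum Rs k.
Proof.
  revert Rs; induction k as [|a k IH]; intros Rs Hz Hl; [destruct Hz|].
  destruct Rs as [|r Rs]; [simpl in Hl; lia|]. rewrite wsum_cons.
  destruct Hz as [<-|Hz].
  - exists r. split; [simpl; auto|]. pose proof (wsum_nonneg Rs k). lra.
  - destruct (IH Rs Hz) as [r' [Hr' Hle]]; [simpl in Hl; lia|].
    exists r'. split; [simpl; auto|]. pose proof (rpow0_nonneg (IZR (Z.abs a)) (2 * r)). lra.
Qed.

Lemma rpow0_ge_of_ln v r t x : 0 < v <= r -> 0 < t -> t / (2 * v) <= ln x -> 0 < x ->
  t <= rpow0 x (2 * r).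
Proof.
  intros Hvr Ht Hx Hx0. unfold rpow0. destruct Req_EM_T; [lra|]. unfold Rpower.
  pose proof (exp_ineq1_le (2 * r * ln x)).
  assert (t <= 2 * r * (t / (2 * v))); [|nra].
  replace (2 * r * (t / (2 * v))) with (t * (r / v)) by (field; lra).
  assert (1 <= r / v); [|nra].
  apply Rmult_le_reg_r with v; [lra|]. unfold Rdiv. rewrite Rmult_assoc, Rinv_l; lra.
Qed.

Lemma weight_lt_entries_le Rs v t k : 0 < v -> (forall r, In r Rs -> v <= r) -> 0 < t ->
  length k = length Rs -> weight Rs k < t ->
  forall z, In z k -> (Z.abs z <= Z.of_nat (nat_up (exp (t / (2 * v)))))%Z.
Proof.
  intros Hv HRs Ht Hl Hw z Hz.
  destruct (Z_le_gt_dec (Z.abs z) (Z.of_nat (nat_up (exp (t / (2 * v)))))) as [|Hgt]; auto.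
  exfalso. destruct (wsum_ge_entry Rs k z Hz Hl) as [r [Hr Hle]].
  pose proof (nat_up_spec (exp (t / (2 * v))) ltac:(left; apply exp_pos)) as HK.
  assert (Hz1 : INR (nat_up (exp (t / (2 * v)))) + 1 <= IZR (Z.abs z)).
  { rewrite INR_IZR_INZ, <- plus_IZR. apply IZR_le. lia. }
  assert (t <= rpow0 (IZR (Z.abs z)) (2 * r)).
  { apply (rpow0_ge_of_ln v); [split; auto| auto| |pose proof (exp_pos (t / (2 * v))); lra].
    rewrite <- (ln_exp (t / (2 * v))). apply ln_le_compat; [apply exp_pos|lra]. }
  pose proof (wsum_nonneg Rs k). rewrite weight_wsum in Hw. lra.
Qed.

Lemma count_low_weights Rs d v t lam : length Rs = d -> 0 < v -> (forall r, In r Rs -> v <= r) ->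
  0 < t -> 0 <= lam ->
  exists K (S : list (Zd d)), NoDup S /\ (forall k, ~ In k S -> t <= weight Rs (proj1_sig k)) /\
    INR (length S) <= exp (lam * (t - 1)) * fold_right (fun r p => theta lam K r * p) 1 Rs.
Proof.
  intros Hd Hv HRs Ht Hl.
  set (K := nat_up (exp (t / (2 * v)))).
  set (L := filter (fun k => if Rlt_dec (weight Rs k) t then true else false) (box (repeat K d))).
  exists K, (map (toZd d) L). split; [|split].
  - apply toZd_NoDup; [apply NoDup_filter, box_NoDup|].
    intros k Hk. apply filter_In in Hk. destruct Hk as [Hk _].
    apply box_elem_length in Hk. rewrite repeat_length in Hk. auto.
  - intros k Hk. destruct (Rle_dec t (weight Rs (proj1_sig k))) as [|Hlt]; auto. exfalso. apply Hk.
    rewrite <- (toZd_proj d k). apply in_map, filter_In. split.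
    + apply box_In. destruct k as [k Hkl]. simpl in *. rewrite <- Hkl.
      pose proof (weight_lt_entries_le Rs v t k Hv HRs Ht ltac:(lia) ltac:(lra)) as Hz. fold K in Hz.
      clear -Hz. induction k; simpl; constructor; [apply Hz; simpl; auto|].
      apply IHk. intros; apply Hz; simpl; auto.
    + destruct Rlt_dec; auto. lra.
  - rewrite length_map. eapply Rle_trans; [apply (count_weight_lt_le _ _ _ lam Hl)|].
    rewrite <- Hd, fsum_box_exp_wsum. lra.

Qed.

Lemma exp_neg_le_pow (Y : R) (N : nat) : 0 < Y -> (1 <= N)%nat -> exp (- Y) <= INR N ^ N / Y ^ N.
Proof.
  intros HY HN. assert (HNp : 0 < INR N) by (apply lt_0_INR; lia).
  assert (H2 : (Y / INR N) ^ N <= exp Y).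
  { replace Y with (INR N * (Y / INR N)) at 2 by (field; lra). rewrite exp_INR_mul.
    apply pow_incr. split; [left; apply Rdiv_lt_0_compat; lra|].
    pose proof (exp_ineq1_le (Y / INR N)). lra. }
  rewrite exp_Ropp. unfold Rdiv in *. rewrite Rpow_mult_distr, pow_inv in H2.
  assert (0 < Y ^ N) by (apply pow_lt; auto).
  assert (0 < INR N ^ N) by (apply pow_lt; auto).
  apply Rle_trans with (/ (Y ^ N * / INR N ^ N)).
  - apply Rinv_le_contravar; auto. apply Rmult_lt_0_compat; auto. apply Rinv_0_lt_compat; auto.
  - right. rewrite Rinv_mult, Rinv_inv. ring.
Qed.

Lemma exp_neg_Rpower_le w p (N : nat) : 1 <= w -> 2 <= p * INR N -> (1 <= N)%nat ->
  exp (- Rpower w p) <= INR N ^ N / w ^ 2.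
Proof.
  intros Hw Hp HN.
  assert (Hsq : w ^ 2 <= Rpower w p ^ N).
  { rewrite <- (Rpower_pow N (Rpower w p)), Rpower_mult, <- (Rpower_pow 2 w)
      by (lra || (unfold Rpower; apply exp_pos)).
    apply Rle_Rpower; simpl INR; lra. }
  eapply Rle_trans; [apply (exp_neg_le_pow _ N); [unfold Rpower; apply exp_pos|exact HN]|].
  unfold Rdiv. apply Rmult_le_compat_l; [apply pow_le, pos_INR|].
  apply Rinv_le_contravar; [apply pow_lt; lra|exact Hsq].
Qed.

Lemma exp_neg_mul_Rpower_le_large lam z p (N : nat) :
  1 <= lam -> 1 <= z -> 0 <= p -> 2 <= p * INR N -> (1 <= N)%nat ->
  exp (- lam * Rpower z p) <= exp (- lam) * (exp 1 * INR N ^ N) * / z ^ 2.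
Proof.
  intros Hl Hz Hp HpN HN.
  assert (HY : 1 <= Rpower z p) by (apply Rpower_ge1; auto).
  assert (E : exp (- lam * Rpower z p) <= exp (- lam) * exp 1 * exp (- Rpower z p)).
  { rewrite <- !exp_plus. apply exp_le_compat. nra. }
  pose proof (exp_neg_Rpower_le z p N Hz HpN HN).
  pose proof (exp_pos (- lam)). pose proof (exp_pos 1).
  eapply Rle_trans; [exact E|].
  replace (exp (- lam) * (exp 1 * INR N ^ N) * / z ^ 2)
    with (exp (- lam) * exp 1 * (INR N ^ N / z ^ 2)) by (unfold Rdiv; ring).
  apply Rmult_le_compat_l; nra.
Qed.

(* [lam z^p = (z / h)^p] for [h = lam^(-1/p)]: the terms are at most 1 while [z <= h]
   and decay like [(h / z)^2] afterwards. *)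
Lemma exp_neg_mul_Rpower_le_small lam z p (N : nat) :
  0 < lam -> 1 <= z -> 0 < p -> 2 <= p * INR N -> (1 <= N)%nat ->
  exp (- lam * Rpower z p) <=
  (1 + INR N ^ N) * (2 * Rpower lam (- / p) ^ 2 / (z ^ 2 + Rpower lam (- / p) ^ 2)).
Proof.
  intros Hl Hz Hp HpN HN. set (h := Rpower lam (- / p)).
  assert (Hh : 0 < h) by (unfold h, Rpower; apply exp_pos).
  assert (HNN : 0 <= INR N ^ N) by (apply pow_le, pos_INR).
  assert (Hz2 : 0 < z ^ 2) by (apply pow_lt; lra).
  assert (Hh2 : 0 < h ^ 2) by (apply pow_lt; lra).
  assert (Hfrac : 0 < 2 * h ^ 2 / (z ^ 2 + h ^ 2)) by (apply Rdiv_lt_0_compat; lra).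
  destruct (Rle_dec z h) as [Hzh|Hzh].
  - assert (exp (- lam * Rpower z p) <= 1).
    { rewrite <- exp_0. apply exp_le_compat.
      assert (0 < Rpower z p) by (unfold Rpower; apply exp_pos). nra. }
    assert (1 <= 2 * h ^ 2 / (z ^ 2 + h ^ 2)); [|nra].
    apply Rmult_le_reg_r with (z ^ 2 + h ^ 2); [lra|].
    unfold Rdiv. rewrite Rmult_assoc, Rinv_l by lra.
    assert (z ^ 2 <= h ^ 2) by (apply pow_incr; lra). lra.
  - assert (Hzh1 : 1 <= z / h).
    { apply Rmult_le_reg_r with h; auto. unfold Rdiv. rewrite Rmult_assoc, Rinv_l; lra. }
    assert (HY : lam * Rpower z p = Rpower (z / h) p).
    { unfold h, Rpower. rewrite ln_div, ln_exp by (try lra; apply exp_pos).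
      rewrite <- (exp_ln lam) at 1 by auto. rewrite <- exp_plus. f_equal. field. lra. }
    replace (- lam * Rpower z p) with (- Rpower (z / h) p) by (rewrite <- HY; ring).
    eapply Rle_trans; [apply (exp_neg_Rpower_le _ _ N); auto|].
    replace (INR N ^ N / (z / h) ^ 2) with (INR N ^ N * (h ^ 2 / z ^ 2)) by (field; lra).
    apply Rle_trans with (INR N ^ N * (2 * h ^ 2 / (z ^ 2 + h ^ 2)));
      [|rewrite Rmult_plus_distr_r, Rmult_1_l; lra].
    apply Rmult_le_compat_l; [exact HNN|].
    assert (h ^ 2 <= z ^ 2) by (apply pow_incr; lra).
    apply Rmult_le_reg_r with (z ^ 2 * (z ^ 2 + h ^ 2)); [nra|].
    replace (h ^ 2 / z ^ 2 * (z ^ 2 * (z ^ 2 + h ^ 2))) with (h ^ 2 * (z ^ 2 + h ^ 2)) by (field; lra).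
    replace (2 * h ^ 2 / (z ^ 2 + h ^ 2) * (z ^ 2 * (z ^ 2 + h ^ 2))) with (2 * h ^ 2 * z ^ 2)
      by (field; lra).
    nra.
Qed.

Lemma rsum_inv_sq_le K : rsum K (fun i => / INR (S i) ^ 2) <= 2 - 2 / INR (S K).
Proof.
  induction K; [simpl; lra|].
  cbn [rsum]. assert (HK : 0 <= INR K) by apply pos_INR.
  rewrite !S_INR in *. set (a := INR K + 1) in *.
  assert (E : 2 / a - 2 / (a + 1) - / a ^ 2 = (a - 1) / (a ^ 2 * (a + 1))) by (unfold a; field; lra).
  assert (0 <= (a - 1) / (a ^ 2 * (a + 1))); [|lra].
  apply Rmult_le_pos; [unfold a; lra|]. left; apply Rinv_0_lt_compat. unfold a; nra.
Qed.

Lemma rsum_sq_ratio_le K h : 0 < h ->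
  rsum K (fun i => h ^ 2 / (INR (S i) ^ 2 + h ^ 2)) <= 2 * h ^ 2 * (/ h - / (INR K + h)).
Proof.
  intros Hh. induction K.
  - simpl. replace (0 + h) with h by ring. replace (/ h - / h) with 0 by ring. right; ring.
  - cbn [rsum]. rewrite S_INR.
    assert (HK : 0 <= INR K) by apply pos_INR. set (a := INR K) in *.
    assert (h ^ 2 / ((a + 1) ^ 2 + h ^ 2) <= 2 * h ^ 2 * (/ (a + h) - / (a + 1 + h))); [|lra].
    replace (2 * h ^ 2 * (/ (a + h) - / (a + 1 + h))) with (2 * h ^ 2 / ((a + h) * (a + 1 + h)))
      by (field; split; lra).
    apply Rmult_le_reg_r with (((a + 1) ^ 2 + h ^ 2) * ((a + h) * (a + 1 + h)));
      [apply Rmult_lt_0_compat; [|apply Rmult_lt_0_compat]; nra|].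
    replace (h ^ 2 / ((a + 1) ^ 2 + h ^ 2) * (((a + 1) ^ 2 + h ^ 2) * ((a + h) * (a + 1 + h))))
      with (h ^ 2 * ((a + h) * (a + 1 + h))) by (field; repeat split; nra).
    replace (2 * h ^ 2 / ((a + h) * (a + 1 + h)) * (((a + 1) ^ 2 + h ^ 2) * ((a + h) * (a + 1 + h))))
      with (2 * h ^ 2 * ((a + 1) ^ 2 + h ^ 2)) by (field; repeat split; nra).
    assert ((a + h) * (a + 1 + h) <= 2 * ((a + 1) ^ 2 + h ^ 2))
      by (pose proof (Rle_0_sqr (a + 1 - h)); unfold Rsqr in *; nra).
    assert (0 <= h ^ 2) by nra. nra.
Qed.

Definition theta_large_const (N : nat) : R := 2 * exp 1 * INR N ^ N.

Lemma theta_large_const_ge2 N : (1 <= N)%nat -> 2 <= theta_large_const N.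
Proof.
  intros HN. unfold theta_large_const. assert (1 <= INR N) by (apply (le_INR 1); auto).
  assert (1 <= INR N ^ N) by (apply pow_R1_Rle; auto).
  assert (1 <= exp 1) by (pose proof (exp_ineq1_le 1); lra). nra.
Qed.

Definition theta_small_const (N : nat) : R := 9 + 8 * INR N ^ N.

Lemma theta_small_const_ge9 N : 9 <= theta_small_const N.
Proof. unfold theta_small_const. pose proof (pow_le (INR N) N (pos_INR N)). lra. Qed.

Lemma theta_le_large_lam lam K r (N : nat) : 1 <= lam -> 0 <= r -> 1 <= r * INR N ->
  (1 <= N)%nat -> theta lam K r <= 1 + exp (- lam) * (2 * theta_large_const N).
Proof.
  intros Hl Hr HrN HN. rewrite theta_eq. unfold theta_large_const.
  set (c := exp (- lam) * (exp 1 * INR N ^ N)).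
  assert (Hc : 0 <= c).
  { pose proof (exp_pos (- lam)); pose proof (exp_pos 1); pose proof (pow_le (INR N) N (pos_INR N)).
    unfold c. apply Rmult_le_pos; [lra| apply Rmult_le_pos; lra]. }
  assert (rsum K (fun i => exp (- lam * Rpower (INR (S i)) (2 * r))) <=
          c * rsum K (fun i => / INR (S i) ^ 2)).
  { rewrite <- rsum_scal. apply rsum_le. intros i _.
    apply exp_neg_mul_Rpower_le_large; auto; try lra. rewrite S_INR; pose proof (pos_INR i); lra. }
  pose proof (rsum_inv_sq_le K).
  assert (0 < 2 / INR (S K)) by (apply Rdiv_lt_0_compat; [lra| apply lt_0_INR; lia]).
  unfold c in *. nra.
Qed.

Lemma theta_le_small_lam lam K r (N : nat) : 0 < lam <= 1 -> 0 < r -> 1 <= r * INR N ->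
  (1 <= N)%nat -> theta lam K r <= theta_small_const N * Rpower lam (- / (2 * r)).
Proof.
  intros [Hl Hl1] Hr HrN HN. rewrite theta_eq. unfold theta_small_const.
  set (h := Rpower lam (- / (2 * r))).
  assert (Hh : 1 <= h).
  { unfold h, Rpower. rewrite <- exp_0. apply exp_le_compat.
    assert (ln lam <= 0) by (rewrite <- ln_1; apply ln_le_compat; lra).
    assert (0 < / (2 * r)) by (apply Rinv_0_lt_compat; lra). nra. }
  assert (HNN : 0 <= INR N ^ N) by (apply pow_le, pos_INR).
  assert (rsum K (fun i => exp (- lam * Rpower (INR (S i)) (2 * r))) <=
          2 * (1 + INR N ^ N) * rsum K (fun i => h ^ 2 / (INR (S i) ^ 2 + h ^ 2))).
  { rewrite <- rsum_scal. apply rsum_le. intros i _.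
    eapply Rle_trans; [apply (exp_neg_mul_Rpower_le_small _ _ _ N); auto; try lra|].
    - rewrite S_INR; pose proof (pos_INR i); lra.
    - right. fold h. unfold Rdiv. ring. }
  pose proof (rsum_sq_ratio_le K h ltac:(lra)).
  assert (0 < / (INR K + h)) by (apply Rinv_0_lt_compat; pose proof (pos_INR K); lra).
  assert (2 * h ^ 2 * (/ h - / (INR K + h)) <= 2 * h).
  { assert (2 * h ^ 2 * / h = 2 * h) by (field; lra). assert (0 < h ^ 2) by nra. nra. }
  nra.
Qed.

(** * Small and intermediate n *)

Lemma approx_number_small Rs d n C : (1 <= n)%nat -> (n <= d)%nat -> 1 <= C ->
  exists a, approx_number_is Rs d n a /\ 1 / 32 * 1 <= a <= C * 1.
Proof.
  intros Hn Hnd HC. apply (approx_number_within Rs d n 1 2); try lra; [lia| | |nra].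
  - exists []. repeat split; [constructor|simpl; lia|]. intros; apply weight_ge1.
  - apply (many_weights_upto_mono Rs d n (1 + INR 1)); [|simpl; lra].
    apply (low_weight_blocks Rs d n 1 d); simpl; lia.
Qed.

Definition mid_delta (N : nat) : R := / (100 * (1 + ln (4 * theta_large_const N))).

Definition mid_rate (d n : nat) : R := ln (1 + INR d * ln 2 / ln (INR n)) / ln (INR n).

Definition mid_threshold (N d n : nat) : R := mid_delta N ^ 2 / mid_rate d n.

Lemma mid_delta_spec N : (1 <= N)%nat ->
  0 < mid_delta N <= / 100 /\ mid_delta N * (100 * (1 + ln (4 * theta_large_const N))) = 1.
Proof.
  intros HN. pose proof (theta_large_const_ge2 N HN).
  assert (0 < ln (4 * theta_large_const N)) by (apply ln_gt_0; lra).
  unfold mid_delta. split; [split; [apply Rinv_0_lt_compat|apply Rinv_le_contravar]; lra|field; lra].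
Qed.

Lemma mid_ratio_ge d n : (1 <= d)%nat -> (2 <= n)%nat -> (n <= 3 ^ d)%nat ->
  3 / 5 <= INR d * ln 2 / ln (INR n).
Proof.
  intros Hd Hn2 Hn3. pose proof ln2_bounds. pose proof ln3_le_ln2. pose proof ln3_ge1.
  assert (HnR : 2 <= INR n) by (apply (le_INR 2); auto).
  assert (HL : 0 < ln (INR n)) by (apply ln_gt_0; lra).
  assert (HL3 : ln (INR n) <= INR d * ln 3).
  { rewrite <- ln_pow by lra. apply ln_le_compat; [lra|].
    replace 3 with (INR 3) by (simpl; lra). rewrite <- pow_INR. apply le_INR; auto. }
  assert (HdR : 1 <= INR d) by (apply (le_INR 1); auto).
  apply Rmult_le_reg_r with (ln (INR n)); auto.
  replace (INR d * ln 2 / ln (INR n) * ln (INR n)) with (INR d * ln 2) by (field; lra). nra.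
Qed.

(* [ln (2 B d / t)] for [t = mid_threshold N d n], written in terms of [y = d ln 2 / ln n]. *)
Definition mid_lambda (B dl y : R) : R := ln (2 * B / (dl ^ 2 * ln 2) * y * ln (1 + y)).

Lemma mid_lambda_bounds B dl y : 2 <= B -> 0 < dl <= / 100 -> 3 / 5 <= y ->
  1 <= mid_lambda B dl y <= ln (4 * B) + 2 / dl + 2 * ln (1 + y).
Proof.
  intros HB [Hd0 Hd1] Hy. pose proof ln2_bounds.
  destruct (ln_1_plus_bounds y Hy) as [Hq Hqy]. set (q := ln (1 + y)) in *.
  assert (Hdl2 : 0 < dl ^ 2) by (apply pow_lt; lra).
  assert (dl ^ 2 <= / 10000) by (replace (/ 10000) with ((/ 100) ^ 2) by field; apply pow_incr; lra).
  set (c := 2 * B / (dl ^ 2 * ln 2)).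
  assert (Hc : 40000 <= c).
  { apply Rmult_le_reg_r with (dl ^ 2 * ln 2); [nra|].
    unfold c. replace (2 * B / (dl ^ 2 * ln 2) * (dl ^ 2 * ln 2)) with (2 * B) by (field; lra). nra. }
  unfold mid_lambda. fold q c. split.
  - rewrite <- (ln_exp 1). apply ln_le_compat; [apply exp_pos|].
    pose proof exp_le_3. assert (24000 <= c * y) by nra. nra.
  - rewrite (ln_mult (_ * y)), (ln_mult c) by nra.
    assert (ln y <= q) by (apply ln_le_compat; lra).
    assert (ln q <= q) by (pose proof (ln_le_sub1 q ltac:(lra)); lra).
    assert (- ln dl <= / dl).
    { rewrite <- ln_Rinv by lra. pose proof (ln_le_sub1 (/ dl) (Rinv_0_lt_compat _ Hd0)). lra. }
    assert (Hc4 : ln c <= ln (4 * B / dl ^ 2)).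
    { apply ln_le_compat; [lra|]. unfold c, Rdiv. rewrite Rinv_mult.
      assert (/ ln 2 <= 2) by (apply Rle_trans with (/ / 2); [apply Rinv_le_contravar|]; lra).
      assert (0 < / dl ^ 2) by (apply Rinv_0_lt_compat; nra).
      replace (4 * B * / dl ^ 2) with (2 * B * / dl ^ 2 * 2) by ring.
      rewrite <- Rmult_assoc. apply Rmult_le_compat_l; nra. }
    rewrite ln_div, ln_pow in Hc4 by nra. simpl INR in Hc4. unfold Rdiv. lra.
Qed.

Lemma mid_exponent_lt B dl y L : 2 <= B -> dl * (100 * (1 + ln (4 * B))) = 1 -> 0 < L ->
  3 / 5 <= y ->
  mid_lambda B dl y * (dl ^ 2 * L / ln (1 + y)) + dl ^ 2 * L / ln (1 + y) < L.
Proof.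
  intros HB Hdl HL Hy.
  assert (H4B : 0 < ln (4 * B)) by (apply ln_gt_0; lra).
  assert (Hd0 : 0 < dl) by (apply Rmult_lt_reg_r with (100 * (1 + ln (4 * B))); nra).
  assert (Hd1 : dl <= / 100) by (apply Rmult_le_reg_r with (100 * (1 + ln (4 * B))); nra).
  destruct (mid_lambda_bounds B dl y HB (conj Hd0 Hd1) Hy) as [_ Hlam].
  destruct (ln_1_plus_bounds y Hy) as [Hq Hqy].
  set (q := ln (1 + y)) in *. set (t := dl ^ 2 * L / q).
  assert (Ht : t * (ln (4 * B) + 1) = L / q * (dl / 100)).
  { unfold t. replace (dl / 100) with (dl * (dl * (100 * (1 + ln (4 * B)))) / 100) by (rewrite Hdl; field).
    field. lra. }
  assert (Ht2 : t * (2 / dl) = L / q * (2 * dl)) by (unfold t; field; lra).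
  assert (Htq : t * q = dl ^ 2 * L) by (unfold t; field; lra).
  assert (HLq : L / q <= L * (8 / 3)).
  { unfold Rdiv at 1. apply Rmult_le_compat_l; [lra|].
    apply Rle_trans with (/ (3 / 8)); [apply Rinv_le_contravar|]; lra. }
  assert (0 < t) by (unfold t; apply Rdiv_lt_0_compat; [apply Rmult_lt_0_compat; [apply pow_lt|]|]; lra).
  assert (Hlt : mid_lambda B dl y * t <= t * (ln (4 * B) + 2 / dl + 2 * q))
    by (rewrite Rmult_comm; apply Rmult_le_compat_l; lra).
  replace (t * (ln (4 * B) + 2 / dl + 2 * q))
    with (t * (ln (4 * B) + 1) - t + t * (2 / dl) + 2 * (t * q)) in Hlt by ring.
  rewrite Ht, Ht2, Htq in Hlt.
  assert (L / q * dl <= L * (8 / 3) * dl) by (apply Rmult_le_compat_r; lra).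
  assert (L * dl <= L / 100) by (unfold Rdiv; apply Rmult_le_compat_l; lra).
  assert (dl ^ 2 <= / 10000) by (replace (/ 10000) with ((/ 100) ^ 2) by field; apply pow_incr; lra).
  assert (dl ^ 2 * L <= / 10000 * L) by (apply Rmult_le_compat_r; lra).
  nra.
Qed.

(* Chernoff with [lam = ln (2 B d / t)], so that [e^(-lam) * 2 B = t / d]. *)
Lemma mid_few_weights_below v N Rs d n : 0 < v -> (1 <= N)%nat -> 1 <= v * INR N ->
  (1 <= d)%nat -> length Rs = d -> (forall r, In r Rs -> v <= r) ->
  (2 <= n)%nat -> (n <= 3 ^ d)%nat ->
  few_weights_below Rs d n (mid_threshold N d n).
Proof.
  intros Hv HN HvN Hd HRl HRs Hn2 Hn3.
  destruct (mid_delta_spec N HN) as [[Hd0 Hd1] Hdeq]. pose proof (theta_large_const_ge2 N HN) as HB.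
  set (dl := mid_delta N) in *. set (B := theta_large_const N) in *.
  assert (HdR : 1 <= INR d) by (apply (le_INR 1); auto).
  assert (HnR : 2 <= INR n) by (apply (le_INR 2); auto).
  pose proof ln2_bounds.
  set (L := ln (INR n)). assert (HL : 0 < L) by (apply ln_gt_0; lra).
  set (y := INR d * ln 2 / L).
  assert (Hy : 3 / 5 <= y) by (apply mid_ratio_ge; auto).
  destruct (ln_1_plus_bounds y Hy) as [Hq Hqy]. set (q := ln (1 + y)) in *.
  set (t := dl ^ 2 * L / q).
  assert (Ht : 0 < t) by (apply Rdiv_lt_0_compat; [apply Rmult_lt_0_compat; [apply pow_lt|]|]; lra).
  replace (mid_threshold N d n) with t by (unfold t, mid_threshold, mid_rate; fold L y q dl; field; lra).
  set (lam := mid_lambda B dl y).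
  assert (HX : lam = ln (2 * B * INR d / t)).
  { unfold lam, mid_lambda. fold q. f_equal. unfold t, y. field.
    repeat split; try apply pow_nonzero; lra. }
  destruct (mid_lambda_bounds B dl y HB (conj Hd0 Hd1) Hy) as [Hlam1 _]. fold lam in Hlam1.
  destruct (count_low_weights Rs d v t lam HRl Hv HRs Ht ltac:(lra)) as [K [S [HSn [HSw HSc]]]].
  exists S. split; [exact HSn|split; [|exact HSw]].
  assert (Hexpl : exp (- lam) * (2 * B) = t / INR d).
  { rewrite HX, exp_Ropp, exp_ln by (apply Rdiv_lt_0_compat; nra). field. lra. }
  assert (Hprod : fold_right (fun r p => theta lam K r * p) 1 Rs <=
                  fold_right (fun r p => (1 + t / INR d) * p) 1 Rs).
  { apply fold_prod_le. intros r Hr.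
    split; [apply theta_nonneg|]. rewrite <- Hexpl.
    specialize (HRs r Hr). apply theta_le_large_lam; auto; try lra. pose proof (pos_INR N). nra. }
  rewrite fold_prod_const, HRl in Hprod.
  assert (Hpow : (1 + t / INR d) ^ d <= exp t).
  { replace t with (INR d * (t / INR d)) at 2 by (field; lra). rewrite exp_INR_mul.
    assert (0 < t / INR d) by (apply Rdiv_lt_0_compat; lra).
    apply pow_incr. split; [lra|apply exp_ineq1_le]. }
  assert (Hkey : lam * t + t < L) by (apply mid_exponent_lt; auto).
  assert (Hlt : INR (length S) < INR n); [|apply INR_lt in Hlt; lia].
  eapply Rle_lt_trans; [exact HSc|].
  apply Rle_lt_trans with (exp (lam * (t - 1)) * exp t).
  { apply Rmult_le_compat_l; [left; apply exp_pos|lra]. }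
  rewrite <- exp_plus. unfold L in Hkey. rewrite <- (exp_ln (INR n)) by lra.
  apply exp_increasing. nra.
Qed.

Lemma mid_threshold_cube_ge N d : (1 <= N)%nat -> (1 <= d)%nat ->
  mid_delta N ^ 2 * INR d <= mid_threshold N d (3 ^ d).
Proof.
  intros HN Hd. destruct (mid_delta_spec N HN) as [[Hd0 _] _]. pose proof ln2_bounds. pose proof ln3_ge1.
  assert (HdR : 1 <= INR d) by (apply (le_INR 1); auto).
  assert (HL0 : ln (INR (3 ^ d)) = INR d * ln 3).
  { rewrite pow_INR, ln_pow by (simpl; lra). simpl INR. f_equal. f_equal. ring. }
  unfold mid_threshold, mid_rate. rewrite HL0.
  replace (INR d * ln 2 / (INR d * ln 3)) with (ln 2 / ln 3) by (field; lra).
  assert (Hy : 0 < ln 2 / ln 3 <= 1).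
  { split; [apply Rdiv_lt_0_compat; lra|].
    apply Rmult_le_reg_r with (ln 3); [lra|]. unfold Rdiv. rewrite Rmult_assoc, Rinv_l; lra. }
  assert (Hq : 0 < ln (1 + ln 2 / ln 3) <= 1).
  { split; [apply ln_gt_0; lra|]. pose proof (ln_le_sub1 (1 + ln 2 / ln 3) ltac:(lra)). lra. }
  replace (mid_delta N ^ 2 / (ln (1 + ln 2 / ln 3) / (INR d * ln 3)))
    with (mid_delta N ^ 2 * (INR d * ln 3) / ln (1 + ln 2 / ln 3)) by (field; lra).
  apply Rmult_le_reg_r with (ln (1 + ln 2 / ln 3)); [lra|].
  replace (mid_delta N ^ 2 * (INR d * ln 3) / ln (1 + ln 2 / ln 3) * ln (1 + ln 2 / ln 3))
    with (mid_delta N ^ 2 * INR d * ln 3) by (field; lra).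
  assert (0 < mid_delta N ^ 2 * INR d) by (apply Rmult_lt_0_compat; [apply pow_lt|]; lra).
  nra.
Qed.

Lemma mid_rate_pos d n : (1 <= d)%nat -> (2 <= n)%nat -> 0 < mid_rate d n.
Proof.
  intros Hd Hn. pose proof ln2_bounds.
  assert (HdR : 1 <= INR d) by (apply (le_INR 1); auto).
  assert (HL : 0 < ln (INR n)) by (apply ln_gt_0; apply (lt_INR 1); lia).
  apply Rdiv_lt_0_compat; auto. apply ln_gt_0.
  assert (0 < INR d * ln 2 / ln (INR n)) by (apply Rdiv_lt_0_compat; nra). lra.
Qed.

(* Cut the coordinates into [m ~ 2 L / ln (d / L)] blocks of length [b >= sqrt (d / L)],
   so that [b ^ m >= e ^ L]. *)
Lemma block_parameters d L : 0 < L -> 16 * L <= INR d -> ln (INR d / L) <= 2 * L ->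
  exists m b : nat, (m * b <= d)%nat /\ 0 < INR b /\ L <= INR m * ln (INR b) /\
    1 + INR m <= 6 * L / ln (INR d / L).
Proof.
  intros HL Hd16 HlxL. set (x := INR d / L) in *.
  assert (HxL : x * L = INR d) by (unfold x; field; lra).
  assert (Hx16 : 16 <= x) by nra.
  set (lx := ln x) in *. assert (Hlx2 : 2 <= lx) by (apply ln_ge_2; exact Hx16).
  set (m := nat_up (2 * L / lx)).
  assert (H1L : 1 <= 2 * L / lx).
  { apply Rmult_le_reg_r with lx; [lra|]. unfold Rdiv. rewrite Rmult_assoc, Rinv_l; lra. }
  destruct (nat_up_spec (2 * L / lx)) as [Hm1 Hm2]; [lra|]. fold m in Hm1, Hm2.
  set (b := nat_down (INR d / INR m)).
  destruct (nat_down_spec (INR d / INR m)) as [Hb1 Hb2]; [apply Rlt_le, Rdiv_lt_0_compat; lra|].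
  fold b in Hb1, Hb2.
  assert (Hdm : x / 2 <= INR d / INR m).
  { apply Rle_trans with (INR d / (4 * L / lx)).
    - replace (INR d / (4 * L / lx)) with (x * lx / 4) by (unfold x; field; split; lra). nra.
    - unfold Rdiv. apply Rmult_le_compat_l; [lra|]. apply Rinv_le_contravar; unfold Rdiv in *; lra. }
  assert (Hsx : sqrt x <= INR b).
  { assert (sqrt x * sqrt x = x) by (apply sqrt_sqrt; lra).
    assert (4 <= sqrt x) by (rewrite <- (sqrt_square 4) by lra; apply sqrt_le_1_alt; lra). nra. }
  assert (Hsx0 : 0 < sqrt x) by (apply sqrt_lt_R0; lra).
  exists m, b. split; [|split; [lra|split]].
  - apply INR_le. rewrite mult_INR. apply Rmult_le_reg_r with (/ INR m); [apply Rinv_0_lt_compat; lra|].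
    replace (INR m * INR b * / INR m) with (INR b) by (field; lra). exact Hb1.
  - assert (Hlnb : lx / 2 <= ln (INR b)).
    { apply Rle_trans with (ln (sqrt x)); [|apply ln_le_compat; auto].
      unfold lx. rewrite <- (sqrt_sqrt x) at 1 by lra. rewrite ln_mult by lra. lra. }
    apply Rle_trans with ((2 * L / lx) * (lx / 2)); [right; field; lra|].
    apply Rmult_le_compat; lra.
  - unfold Rdiv in *. lra.
Qed.

Lemma mid_many_weights_blocks Rs d n : (1 <= d)%nat -> (d < n)%nat -> 16 * ln (INR n) <= INR d ->
  exists tau, 1 <= tau /\ tau * mid_rate d n <= 16 /\ many_weights_upto Rs d n tau.
Proof.
  intros Hd Hdn Hd16. pose proof ln2_bounds.
  assert (Hnd : INR d + 1 <= INR n) by (rewrite <- S_INR; apply le_INR; lia).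
  assert (HnR : 2 <= INR n) by (apply (le_INR 2); lia).
  assert (HdR : 1 <= INR d) by (apply (le_INR 1); auto).
  set (L := ln (INR n)) in *. assert (HL : 0 < L) by (apply ln_gt_0; lra).
  assert (HL2 : ln 2 <= L) by (apply ln_le_compat; lra).
  set (x := INR d / L). assert (HxL : x * L = INR d) by (unfold x; field; lra).
  assert (Hx16 : 16 <= x) by nra.
  assert (Hlx2 : 2 <= ln x) by (apply ln_ge_2; exact Hx16).
  assert (HlxL : ln x <= 2 * L).
  { replace (2 * L) with (ln (INR n ^ 2)) by (unfold L; rewrite ln_pow by lra; simpl; ring).
    apply ln_le_compat; [lra|]. apply Rmult_le_reg_r with L; [exact HL|]. rewrite HxL.
    assert (1 <= INR n * L) by nra. simpl. nra. }
  destruct (block_parameters d L HL Hd16 HlxL) as [m [b [Hmb [Hb0 [Hnb H1m]]]]]. fold x in H1m.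
  pose proof (pos_INR m). exists (1 + INR m). split; [lra|split].
  2:{ apply (low_weight_blocks Rs d n m b); auto.
      apply INR_le. rewrite pow_INR, <- (exp_ln (INR n)), <- (exp_ln (INR b)), <- exp_INR_mul by lra.
      apply exp_le_compat. exact Hnb. }
  unfold mid_rate. fold L. set (y := INR d * ln 2 / L).
  assert (Hyx : y <= x) by (replace y with (x * ln 2) by (unfold y, x; field; lra); nra).
  assert (Hy0 : 0 < y) by (apply Rdiv_lt_0_compat; nra).
  assert (Hq0 : 0 < ln (1 + y)) by (apply ln_gt_0; lra).
  assert (Hq : ln (1 + y) <= 2 * ln x).
  { replace (2 * ln x) with (ln (x ^ 2)) by (rewrite ln_pow by lra; simpl; ring).
    apply ln_le_compat; [lra|]. simpl. nra. }
  assert (HqL : ln (1 + y) / L <= 2 * ln x / L)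
    by (unfold Rdiv; apply Rmult_le_compat_r; [left; apply Rinv_0_lt_compat|]; lra).
  apply Rle_trans with ((6 * L / ln x) * (2 * ln x / L)).
  - apply Rmult_le_compat; try lra. apply Rlt_le, Rdiv_lt_0_compat; lra.
  - replace (6 * L / ln x * (2 * ln x / L)) with 12 by (field; lra). lra.
Qed.

Lemma mid_many_weights_cube Rs d n : length Rs = d -> (forall r, In r Rs -> 0 <= r) ->
  (1 <= d)%nat -> (2 <= n)%nat -> (n <= 3 ^ d)%nat -> INR d <= 16 * ln (INR n) ->
  exists tau, 1 <= tau /\ tau * mid_rate d n <= 512 /\ many_weights_upto Rs d n tau.
Proof.
  intros HRl HRs Hd Hn2 Hn3 Hd16. pose proof ln2_bounds.
  assert (HdR : 1 <= INR d) by (apply (le_INR 1); auto).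
  assert (HnR : 2 <= INR n) by (apply (le_INR 2); auto).
  set (L := ln (INR n)) in *. assert (HL : 0 < L) by (apply ln_gt_0; lra).
  exists (1 + INR d). split; [lra|split; [|apply low_weight_cube; auto]].
  unfold mid_rate. fold L. set (y := INR d * ln 2 / L).
  assert (Hy0 : 0 < y) by (apply Rdiv_lt_0_compat; nra).
  assert (Hy16 : y <= 16).
  { apply Rmult_le_reg_r with L; [exact HL|]. unfold y. field_simplify; nra. }
  assert (HqL : ln (1 + y) / L <= 16 / L).
  { unfold Rdiv. apply Rmult_le_compat_r; [left; apply Rinv_0_lt_compat; lra|].
    pose proof (ln_le_sub1 (1 + y) ltac:(lra)). lra. }
  assert (0 <= ln (1 + y) / L)
    by (apply Rmult_le_pos; [left; apply ln_gt_0; lra|left; apply Rinv_0_lt_compat; lra]).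
  apply Rle_trans with (2 * INR d * (16 / L)); [apply Rmult_le_compat; lra|].
  replace (2 * INR d * (16 / L)) with (32 * (INR d / L)) by (field; lra).
  assert (INR d / L <= 16); [|lra].
  apply Rmult_le_reg_r with L; [exact HL|]. replace (INR d / L * L) with (INR d) by (field; lra). lra.
Qed.

Lemma approx_number_mid v N Rs d n C : 0 < v -> (1 <= N)%nat -> 1 <= v * INR N -> (1 <= d)%nat ->
  length Rs = d -> (forall r, In r Rs -> v <= r) -> (d < n)%nat -> (n <= 3 ^ d)%nat ->
  / mid_delta N <= C ->
  exists a, approx_number_is Rs d n a /\
    1 / 32 * sqrt (mid_rate d n) <= a <= C * sqrt (mid_rate d n).
Proof.
  intros Hv HN HvN Hd HRl HRs Hdn Hn3 HC.
  destruct (mid_delta_spec N HN) as [[Hd0 _] _].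
  assert (Hrate := mid_rate_pos d n Hd ltac:(lia)).
  assert (Hph : sqrt (mid_rate d n) * sqrt (mid_rate d n) = mid_rate d n) by (apply sqrt_sqrt; lra).
  assert (HC0 : 0 < C) by (eapply Rlt_le_trans; [apply Rinv_0_lt_compat, Hd0|exact HC]).
  assert (Hlow : exists tau, 1 <= tau /\ tau * mid_rate d n <= 512 /\ many_weights_upto Rs d n tau).
  { destruct (Rle_dec (16 * ln (INR n)) (INR d)).
    - destruct (mid_many_weights_blocks Rs d n) as [tau [H1 [H2 H3]]]; auto.
      exists tau. repeat split; auto; lra.
    - apply mid_many_weights_cube; auto; try lia; try lra. intros r Hr. specialize (HRs r Hr). lra. }
  destruct Hlow as [tau [Htau1 [Htau Hmany]]].
  assert (Ht : mid_threshold N d n * mid_rate d n = mid_delta N ^ 2)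
    by (unfold mid_threshold; field; lra).
  assert (Ht0 : 0 < mid_threshold N d n) by (apply Rdiv_lt_0_compat; [apply pow_lt|]; lra).
  apply (approx_number_within Rs d n (mid_threshold N d n) tau); try lra; [lia|apply sqrt_pos| | | |].
  - apply (mid_few_weights_below v N); auto; lia.
  - exact Hmany.
  - rewrite Hph. nra.
  - rewrite Hph. replace (C * C * mid_rate d n * mid_threshold N d n) with (C * C * mid_delta N ^ 2)
      by (rewrite <- Ht; ring).
    assert (1 <= C * mid_delta N); [|nra].
    apply Rmult_le_reg_r with (/ mid_delta N); [apply Rinv_0_lt_compat; lra|].
    rewrite Rmult_assoc, Rinv_r, Rmult_1_l, Rmult_1_r by lra. exact HC.
Qed.

Lemma phi_mid_eq d n : 1 < INR n ->
  sqrt (log2 (1 + INR d / log2 (INR n)) / log2 (INR n)) = sqrt (mid_rate d n).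
Proof.
  intros Hn. pose proof ln2_bounds. assert (0 < ln (INR n)) by (apply ln_gt_0; auto).
  unfold mid_rate, log2. f_equal.
  replace (INR d / (ln (INR n) / ln 2)) with (INR d * ln 2 / ln (INR n)) by (field; lra).
  field. lra.
Qed.

(** * Large n *)

Definition inv_sum (Rs : list R) : R := fold_right (fun r s => / r + s) 0 Rs.

Lemma gR_inv_sum Rs : gR Rs = / inv_sum Rs.
Proof. reflexivity. Qed.

Lemma inv_sum_pos Rs : Rs <> [] -> (forall r, In r Rs -> 0 < r) -> 0 < inv_sum Rs.
Proof.
  induction Rs as [|r Rs IH]; intros Hne HR; [contradiction|].
  change (inv_sum (r :: Rs)) with (/ r + inv_sum Rs).
  assert (0 < / r) by (apply Rinv_0_lt_compat, HR; simpl; auto).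
  destruct Rs as [|r' Rs']; [unfold inv_sum; simpl; lra|].
  assert (0 < inv_sum (r' :: Rs')); [|lra].
  apply IH; [discriminate|]. intros; apply HR; simpl in *; tauto.
Qed.

Lemma inv_sum_bounds v u Rs : 0 < v <= u -> (forall r, In r Rs -> v <= r <= u) ->
  INR (length Rs) / u <= inv_sum Rs <= INR (length Rs) / v.
Proof.
  intros Hvu. induction Rs as [|r Rs IH]; intros H; [unfold inv_sum; simpl; unfold Rdiv; lra|].
  destruct IH as [I1 I2]; [intros; apply H; simpl; auto|].
  destruct (H r) as [Hr1 Hr2]; [simpl; auto|].
  change (inv_sum (r :: Rs)) with (/ r + inv_sum Rs). cbn [length]. rewrite S_INR.
  unfold Rdiv in *.
  assert (/ u <= / r) by (apply Rinv_le_contravar; lra).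
  assert (/ r <= / v) by (apply Rinv_le_contravar; lra).
  split; nra.
Qed.

Lemma gR_bounds v u Rs d : 0 < v <= u -> (forall r, In r Rs -> v <= r <= u) ->
  length Rs = d -> (1 <= d)%nat -> 0 < gR Rs /\ v <= gR Rs * INR d <= u.
Proof.
  intros Hvu HRs HRl Hd. assert (HdR : 1 <= INR d) by (apply (le_INR 1); auto).
  destruct (inv_sum_bounds v u Rs Hvu HRs) as [Sv1 Sv2]. rewrite HRl in Sv1, Sv2.
  assert (HSv : 0 < inv_sum Rs) by (eapply Rlt_le_trans; [|apply Sv1]; apply Rdiv_lt_0_compat; lra).
  rewrite gR_inv_sum. set (Sv := inv_sum Rs) in *.
  split; [apply Rinv_0_lt_compat; auto|].
  replace (/ Sv * INR d) with (INR d / Sv) by (unfold Rdiv; ring).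
  split.
  - apply Rmult_le_reg_r with Sv; auto. replace (INR d / Sv * Sv) with (INR d) by (field; lra).
    apply Rmult_le_reg_r with (/ v); [apply Rinv_0_lt_compat; lra|].
    replace (v * Sv * / v) with Sv by (field; lra). auto.
  - apply Rmult_le_reg_r with Sv; auto. replace (INR d / Sv * Sv) with (INR d) by (field; lra).
    apply Rmult_le_reg_r with (/ u); [apply Rinv_0_lt_compat; lra|].
    replace (u * Sv * / u) with Sv by (field; lra). auto.
Qed.

Lemma fold_sum_div (c : R) Rs : fold_right (fun r s => c / r + s) 0 Rs = c * inv_sum Rs.
Proof. unfold inv_sum. induction Rs; simpl; [|rewrite IHRs; unfold Rdiv]; ring. Qed.

Lemma box_card_map (f : R -> nat) Rs :
  INR (box_card (map f Rs)) = fold_right (fun r p => INR (2 * f r + 1) * p) 1 Rs.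
Proof. induction Rs; simpl; [|rewrite mult_INR, IHRs]; reflexivity. Qed.

Lemma fold_combine_map (f : R -> nat) Rs :
  fold_right (fun p s => rpow0 (INR (fst p)) (2 * snd p) + s) 0 (combine (map f Rs) Rs) =
  fold_right (fun r s => rpow0 (INR (f r)) (2 * r) + s) 0 Rs.
Proof. induction Rs; simpl; [|rewrite IHRs]; reflexivity. Qed.

(* The box with half-widths [K_j ~ n^(g / R_j) / 2] has at least [n] points, since
   [sum_j g / R_j = 1], and all its weights are [<= 1 + d n^(2 g)]. *)
Lemma large_many_weights Rs d n : length Rs = d -> (forall r, In r Rs -> 0 < r) ->
  (1 <= d)%nat -> (1 <= n)%nat ->
  many_weights_upto Rs d n (1 + INR d * Rpower (INR n) (2 * gR Rs)).
Proof.
  intros HRl HR Hd Hn.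
  assert (HnR : 1 <= INR n) by (apply (le_INR 1); auto).
  set (g := gR Rs).
  assert (HSv : 0 < inv_sum Rs) by (apply inv_sum_pos; auto; intros ->; simpl in HRl; lia).
  assert (Hg : g * inv_sum Rs = 1) by (unfold g; rewrite gR_inv_sum; field; lra).
  assert (Hg0 : 0 < g) by (unfold g; rewrite gR_inv_sum; apply Rinv_0_lt_compat; auto).
  set (a := fun r => Rpower (INR n) (g / r)).
  set (K := fun r => nat_up ((a r - 1) / 2)).
  assert (HK : forall r, In r Rs -> 1 <= a r <= INR (2 * K r + 1) /\ INR (K r) <= a r).
  { intros r Hr. assert (Ha1 : 1 <= a r).
    { apply Rpower_ge1; auto. apply Rmult_le_pos; [lra|left; apply Rinv_0_lt_compat; auto]. }
    destruct (nat_up_spec ((a r - 1) / 2)) as [K1 K2]; [lra|]. fold (K r) in K1, K2.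
    rewrite plus_INR, mult_INR. simpl (INR 2). simpl (INR 1). lra. }
  assert (Hcard : (n <= box_card (map K Rs))%nat).
  { apply INR_le. rewrite box_card_map.
    eapply Rle_trans; [|apply (fold_prod_exp _ (fun r => g * ln (INR n) / r))].
    - rewrite fold_sum_div, Rmult_comm, <- Rmult_assoc, (Rmult_comm _ g), Hg, Rmult_1_l, exp_ln by lra.
      lra.
    - intros r Hr. replace (exp (g * ln (INR n) / r)) with (a r); [apply HK; auto|].
      unfold a, Rpower. f_equal. field. apply Rgt_not_eq, HR, Hr. }
  eapply many_weights_upto_mono; [apply (low_weight_box Rs d n (map K Rs)); auto|].
  - rewrite length_map; auto.
  - intros r Hr; left; auto.
  - apply Rplus_le_compat_l.
    rewrite fold_combine_map, <- HRl, <- fold_sum_const.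
    apply fold_sum_le. intros r Hr. destruct (HK r Hr) as [[Ha1 _] HKr].
    assert (0 < r) by auto.
    apply Rle_trans with (rpow0 (a r) (2 * r)); [apply rpow0_le; [split; [apply pos_INR|]|]; lra|].
    unfold rpow0. destruct Req_EM_T; [lra|]. unfold a. rewrite Rpower_mult. right. f_equal. field. lra.
Qed.

(* Chosen so that [1 + ln (2 u eps) = - 2 u ln (2 M)] ([large_eps_log]); then the Chernoff
   count at the threshold [eps d n^(2 g)] is at most [n / 2]. *)
Definition large_eps (u : R) (N : nat) : R :=
  exp (- 2 * u * ln (2 * theta_small_const N)) / (2 * exp 1 * u).

(* For [ln n >= d Q] the threshold [eps d n^(2 g)] is at least [d / (2 v)] ([large_Rpower_ge]). *)
Definition large_log_threshold (v u : R) (N : nat) : R := ln (/ (2 * v * large_eps u N)) / (2 * v).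

Lemma large_eps_spec v u N : 0 < v <= u -> 0 < large_eps u N /\ 2 * v * large_eps u N <= 1.
Proof.
  intros Hvu. pose proof (theta_small_const_ge9 N).
  assert (1 <= exp 1) by (pose proof (exp_ineq1_le 1); lra).
  assert (0 < ln (2 * theta_small_const N)) by (apply ln_gt_0; lra).
  assert (exp (- 2 * u * ln (2 * theta_small_const N)) <= 1)
    by (rewrite <- exp_0; apply exp_le_compat; nra).
  pose proof (exp_pos (- 2 * u * ln (2 * theta_small_const N))).
  unfold large_eps. split; [apply Rdiv_lt_0_compat; nra|].
  apply Rle_trans with (2 * v * (1 / (2 * u))).
  - apply Rmult_le_compat_l; [lra|]. unfold Rdiv. rewrite Rmult_1_l.
    apply Rle_trans with (1 * / (2 * exp 1 * u));
      [apply Rmult_le_compat_r; [left; apply Rinv_0_lt_compat; nra|lra]|].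
    rewrite Rmult_1_l. apply Rinv_le_contravar; nra.
  - replace (2 * v * (1 / (2 * u))) with (v / u) by (field; lra).
    apply Rmult_le_reg_r with u; [lra|]. unfold Rdiv. rewrite Rmult_assoc, Rinv_l; lra.
Qed.

Lemma large_eps_log u N : 0 < u ->
  1 + ln (2 * large_eps u N * u) = - 2 * u * ln (2 * theta_small_const N).
Proof.
  intros Hu. unfold large_eps.
  replace (2 * (exp (- 2 * u * ln (2 * theta_small_const N)) / (2 * exp 1 * u)) * u)
    with (exp (- 2 * u * ln (2 * theta_small_const N)) / exp 1)
    by (field; split; [lra|apply Rgt_not_eq, exp_pos]).
  rewrite ln_div, !ln_exp by apply exp_pos. ring.
Qed.

Lemma large_log_threshold_nonneg v u N : 0 < v <= u -> 0 <= large_log_threshold v u N.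
Proof.
  intros Hvu. destruct (large_eps_spec v u N Hvu) as [He0 He1].
  unfold large_log_threshold. apply Rmult_le_pos; [|left; apply Rinv_0_lt_compat; lra].
  rewrite <- ln_1. apply ln_le_compat; [lra|].
  rewrite <- Rinv_1. apply Rinv_le_contravar; nra.
Qed.

Lemma prod_theta_small_le v N lam K Rs : 0 < v -> 1 <= v * INR N -> (1 <= N)%nat ->
  (forall r, In r Rs -> v <= r) -> 0 < lam <= 1 ->
  fold_right (fun r p => theta lam K r * p) 1 Rs <=
  exp (INR (length Rs) * ln (theta_small_const N) - inv_sum Rs / 2 * ln lam).
Proof.
  intros Hv HvN HN HRs Hlam. pose proof (theta_small_const_ge9 N).
  induction Rs as [|r Rs IH]; cbn [fold_right length].
  - unfold inv_sum; simpl. replace (0 * ln (theta_small_const N) - 0 / 2 * ln lam) with 0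
      by (unfold Rdiv; ring). rewrite exp_0. lra.
  - change (inv_sum (r :: Rs)) with (/ r + inv_sum Rs). rewrite S_INR.
    replace ((INR (length Rs) + 1) * ln (theta_small_const N) - (/ r + inv_sum Rs) / 2 * ln lam)
      with ((ln (theta_small_const N) + - / (2 * r) * ln lam) +
            (INR (length Rs) * ln (theta_small_const N) - inv_sum Rs / 2 * ln lam))
      by (assert (0 < r) by (specialize (HRs r (or_introl eq_refl)); lra); field; lra).
    rewrite exp_plus, exp_plus, exp_ln by lra.
    specialize (HRs r (or_introl eq_refl)) as Hr.
    apply Rmult_le_compat; [apply theta_nonneg|apply fold_prod_nonneg; intros; apply theta_nonneg| |].
    + apply theta_le_small_lam; auto; try lra. pose proof (pos_INR N). nra.
    + apply IH. intros; apply HRs; simpl; auto.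
Qed.

Lemma large_Rpower_ge v u N Rs d n : 0 < v <= u -> (1 <= d)%nat -> length Rs = d ->
  (forall r, In r Rs -> v <= r <= u) -> INR d * large_log_threshold v u N <= ln (INR n) ->
  / (2 * v * large_eps u N) <= Rpower (INR n) (2 * gR Rs).
Proof.
  intros Hvu Hd HRl HRs HQ.
  destruct (gR_bounds v u Rs d Hvu HRs HRl Hd) as [Hg0 [Hgd1 _]].
  destruct (large_eps_spec v u N Hvu) as [He0 _].
  pose proof (large_log_threshold_nonneg v u N Hvu).
  rewrite <- (exp_ln (/ (2 * v * large_eps u N))) by (apply Rinv_0_lt_compat; nra).
  apply exp_le_compat.
  replace (ln (/ (2 * v * large_eps u N))) with (2 * v * large_log_threshold v u N)
    by (unfold large_log_threshold; field; lra).
  assert (v * large_log_threshold v u N <= gR Rs * INR d * large_log_threshold v u N)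
    by (apply Rmult_le_compat_r; lra).
  assert (gR Rs * (INR d * large_log_threshold v u N) <= gR Rs * ln (INR n))
    by (apply Rmult_le_compat_l; lra).
  lra.
Qed.

(* With [t = e d exp (Ln / s)] and [lam = s / t]: [- s ln lam = s ln (e d / s) + Ln]. *)
Lemma large_exponent_le u M d s e Ln : 0 < u -> 9 <= M -> 1 <= d -> d / (2 * u) <= s -> 0 < e ->
  1 + ln (2 * e * u) = - 2 * u * ln (2 * M) ->
  let t := e * d * exp (Ln / s) in
  s / t * (t - 1) + (d * ln M - s * ln (s / t)) <= Ln - ln 2.
Proof.
  intros Hu HM Hd Hs He Heu t. pose proof ln2_bounds.
  assert (Hs0 : 0 < s) by (eapply Rlt_le_trans; [|exact Hs]; apply Rdiv_lt_0_compat; lra).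
  assert (Ht : 0 < t) by (apply Rmult_lt_0_compat; [nra|apply exp_pos]).
  assert (Hlam : s / t * (t - 1) <= s).
  { replace (s / t * (t - 1)) with (s - s / t) by (field; lra).
    assert (0 < s / t) by (apply Rdiv_lt_0_compat; lra). lra. }
  assert (Hln : - (s * ln (s / t)) = s * ln (e * d / s) + Ln).
  { assert (Hlnt : ln t = ln (e * d) + Ln / s).
    { unfold t. pose proof (exp_pos (Ln / s)). rewrite ln_mult, ln_exp by nra. ring. }
    rewrite (ln_div s t), Hlnt, (ln_div (e * d) s) by nra. field. lra. }
  assert (Hed : ln (e * d / s) <= ln (2 * e * u)).
  { apply ln_le_compat; [apply Rdiv_lt_0_compat; nra|].
    apply Rmult_le_reg_r with s; [lra|]. replace (e * d / s * s) with (e * d) by (field; lra).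
    apply Rmult_le_reg_r with (/ (2 * u)); [apply Rinv_0_lt_compat; lra|].
    replace (2 * e * u * s * / (2 * u)) with (e * s) by (field; lra).
    unfold Rdiv in Hs. replace (e * d * / (2 * u)) with (e * (d * / (2 * u))) by ring. nra. }
  assert (HM2 : 0 < ln (2 * M)) by (apply ln_gt_0; lra).
  assert (HsM : s * (- 2 * u * ln (2 * M)) <= - d * ln (2 * M)).
  { replace (- d * ln (2 * M)) with (d / (2 * u) * (- 2 * u * ln (2 * M))) by (field; lra).
    assert (- 2 * u * ln (2 * M) < 0) by nra. nra. }
  rewrite <- Heu, (ln_mult 2 M) in HsM by lra.
  assert (- d * (ln 2 + ln M) + d * ln M <= - ln 2) by nra.
  assert (s * ln (e * d / s) <= s * ln (2 * e * u)) by (apply Rmult_le_compat_l; lra).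
  nra.
Qed.

(* Chernoff with [lam = s / t] for [s = inv_sum Rs / 2]; the threshold guarantees [lam <= 1]. *)
Lemma large_few_weights_below v u N Rs d n : 0 < v <= u -> (1 <= N)%nat -> 1 <= v * INR N ->
  (1 <= d)%nat -> length Rs = d -> (forall r, In r Rs -> v <= r <= u) -> (1 <= n)%nat ->
  INR d * large_log_threshold v u N <= ln (INR n) ->
  few_weights_below Rs d n (large_eps u N * INR d * Rpower (INR n) (2 * gR Rs)).
Proof.
  intros Hvu HN HvN Hd HRl HRs Hn HQ.
  assert (HdR : 1 <= INR d) by (apply (le_INR 1); auto).
  assert (HnR : 1 <= INR n) by (apply (le_INR 1); auto).
  destruct (inv_sum_bounds v u Rs Hvu HRs) as [Sv1 Sv2]. rewrite HRl in Sv1, Sv2.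
  destruct (large_eps_spec v u N Hvu) as [He0 _].
  assert (HSv : 0 < inv_sum Rs) by (eapply Rlt_le_trans; [|exact Sv1]; apply Rdiv_lt_0_compat; lra).
  set (e := large_eps u N) in *. set (Ln := ln (INR n)) in *.
  set (s := inv_sum Rs / 2).
  assert (Hs : INR d / (2 * u) <= s)
    by (unfold s; replace (INR d / (2 * u)) with (INR d / u / 2) by (field; lra); lra).
  assert (Hs0 : 0 < s) by (eapply Rlt_le_trans; [|exact Hs]; apply Rdiv_lt_0_compat; lra).
  set (t := e * INR d * exp (Ln / s)).
  assert (Htg : e * INR d * Rpower (INR n) (2 * gR Rs) = t).
  { unfold t, Rpower. do 2 f_equal. rewrite gR_inv_sum. fold Ln. unfold s. field. lra. }
  assert (Ht : 0 < t) by (apply Rmult_lt_0_compat; [nra|apply exp_pos]).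
  assert (Hst : s <= t).
  { apply Rle_trans with (e * INR d * / (2 * v * e)).
    - replace (e * INR d * / (2 * v * e)) with (INR d / v / 2) by (field; lra). unfold s. lra.
    - rewrite <- Htg. apply Rmult_le_compat_l; [nra|]. apply (large_Rpower_ge v u N Rs d n); auto. }
  rewrite Htg. set (lam := s / t).
  assert (Hlam : 0 < lam <= 1).
  { split; [apply Rdiv_lt_0_compat; lra|].
    apply Rmult_le_reg_r with t; [lra|]. unfold lam. replace (s / t * t) with s by (field; lra). lra. }
  destruct (count_low_weights Rs d v t lam HRl ltac:(lra) (fun r Hr => proj1 (HRs r Hr)) Ht ltac:(lra))
    as [K [S [HSn [HSw HSc]]]].
  exists S. split; [exact HSn|split; [|exact HSw]].
  pose proof (prod_theta_small_le v N lam K Rs ltac:(lra) HvN HN (fun r Hr => proj1 (HRs r Hr)) Hlam)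
    as Hprod.
  rewrite HRl in Hprod. fold s in Hprod.
  pose proof (theta_small_const_ge9 N) as HM. set (M := theta_small_const N) in *.
  assert (Hexp := large_exponent_le u M (INR d) s e Ln ltac:(lra) HM HdR Hs He0
                     (large_eps_log u N ltac:(lra))).
  cbv zeta in Hexp. fold t lam in Hexp.
  assert (Hlt : INR (length S) < INR n); [|apply INR_lt in Hlt; lia].
  eapply Rle_lt_trans; [exact HSc|].
  eapply Rle_lt_trans; [apply Rmult_le_compat_l; [left; apply exp_pos|exact Hprod]|].
  rewrite <- exp_plus. eapply Rle_lt_trans; [apply exp_le_compat; exact Hexp|].
  unfold Rminus. rewrite exp_plus, exp_Ropp, exp_ln by lra. unfold Ln. rewrite exp_ln by lra.
  pose proof ln2_bounds. lra.
Qed.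

Lemma large_upper_chernoff v u N Rs d n C : 0 < v <= u -> (1 <= N)%nat -> 1 <= v * INR N ->
  (1 <= d)%nat -> length Rs = d -> (forall r, In r Rs -> v <= r <= u) -> (1 <= n)%nat ->
  INR d * large_log_threshold v u N <= ln (INR n) -> / sqrt (large_eps u N) <= C ->
  exists t, 0 < t /\ few_weights_below Rs d n t /\
    1 <= C * C * / (INR d * Rpower (INR n) (2 * gR Rs)) * t.
Proof.
  intros Hvu HN HvN Hd HRl HRs Hn HQ HC.
  assert (HdR : 1 <= INR d) by (apply (le_INR 1); auto).
  assert (HP : 1 <= Rpower (INR n) (2 * gR Rs)).
  { destruct (gR_bounds v u Rs d Hvu HRs HRl Hd) as [Hg0 _].
    apply Rpower_ge1; [apply (le_INR 1); auto|lra]. }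
  set (P := Rpower (INR n) (2 * gR Rs)) in *.
  destruct (large_eps_spec v u N Hvu) as [He0 _]. set (e := large_eps u N) in *.
  exists (e * INR d * P). split; [apply Rmult_lt_0_compat; [apply Rmult_lt_0_compat|]; lra|split].
  { apply (large_few_weights_below v u N); auto. }
  replace (C * C * / (INR d * P) * (e * INR d * P)) with (C * C * e) by (field; nra).
  assert (Hs : / sqrt e * / sqrt e = / e) by (rewrite <- Rinv_mult, sqrt_sqrt; lra).
  assert (0 < / sqrt e) by (apply Rinv_0_lt_compat, sqrt_lt_R0; lra).
  assert (/ e <= C * C) by (rewrite <- Hs; apply Rmult_le_compat; lra).
  apply Rmult_le_reg_r with (/ e); [apply Rinv_0_lt_compat; lra|].
  rewrite Rmult_assoc, Rinv_r by lra. lra.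
Qed.

(* Below the threshold [n] is at most [e ^ (d Q)], and the bound for [n = 3 ^ d] suffices. *)
Lemma large_upper_from_mid v u N Rs d n C : 0 < v <= u -> (1 <= N)%nat -> 1 <= v * INR N ->
  (1 <= d)%nat -> length Rs = d -> (forall r, In r Rs -> v <= r <= u) -> (3 ^ d < n)%nat ->
  ln (INR n) <= INR d * large_log_threshold v u N ->
  exp (u * large_log_threshold v u N) / mid_delta N <= C ->
  exists t, 0 < t /\ few_weights_below Rs d n t /\
    1 <= C * C * / (INR d * Rpower (INR n) (2 * gR Rs)) * t.
Proof.
  intros Hvu HN HvN Hd HRl HRs Hn3 HQ HC.
  assert (HdR : 1 <= INR d) by (apply (le_INR 1); auto).
  assert (H3d : (3 <= 3 ^ d)%nat) by (pose proof (Nat.pow_le_mono_r 3 1 d); simpl in *; lia).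
  assert (HnR : 1 <= INR n) by (apply (le_INR 1); lia).
  destruct (gR_bounds v u Rs d Hvu HRs HRl Hd) as [Hg0 [_ Hgd]].
  destruct (mid_delta_spec N HN) as [[Hdl0 _] _].
  set (Q := large_log_threshold v u N) in *. set (dl := mid_delta N) in *.
  set (P := Rpower (INR n) (2 * gR Rs)).
  assert (HP : 1 <= P) by (apply Rpower_ge1; lra).
  assert (HPb : P <= exp (2 * u * Q)).
  { unfold P, Rpower. apply exp_le_compat.
    pose proof (large_log_threshold_nonneg v u N Hvu) as HQ0. fold Q in HQ0.
    assert (2 * gR Rs * ln (INR n) <= 2 * gR Rs * (INR d * Q)) by (apply Rmult_le_compat_l; lra).
    assert (gR Rs * INR d * Q <= u * Q) by (apply Rmult_le_compat_r; lra).
    lra. }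
  assert (HCe : exp (u * Q) <= C * dl).
  { apply Rmult_le_reg_r with (/ dl); [apply Rinv_0_lt_compat; lra|].
    rewrite Rmult_assoc, Rinv_r, Rmult_1_r by lra. exact HC. }
  assert (Hexp2 : P <= C * C * dl ^ 2).
  { replace (2 * u * Q) with (u * Q + u * Q) in HPb by ring. rewrite exp_plus in HPb.
    pose proof (exp_pos (u * Q)).
    assert (exp (u * Q) * exp (u * Q) <= (C * dl) * (C * dl)) by (apply Rmult_le_compat; lra).
    replace (C * C * dl ^ 2) with ((C * dl) * (C * dl)) by ring. lra. }
  pose proof (mid_threshold_cube_ge N d HN Hd) as Ht0. fold dl in Ht0.
  exists (mid_threshold N d (3 ^ d)). split; [nra|split].
  - apply (few_weights_below_mono Rs d (3 ^ d)); [lia|].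
    apply (mid_few_weights_below v N); auto; [lra|intros r Hr; apply HRs; auto|lia].
  - apply Rle_trans with (C * C * / (INR d * P) * (dl ^ 2 * INR d)).
    + replace (C * C * / (INR d * P) * (dl ^ 2 * INR d)) with (C * C * dl ^ 2 / P) by (field; lra).
      apply Rmult_le_reg_r with P; [lra|]. unfold Rdiv. rewrite Rmult_assoc, Rinv_l by lra. lra.
    + apply Rmult_le_compat_l; [|exact Ht0].
      apply Rmult_le_pos; [nra|left; apply Rinv_0_lt_compat; nra].
Qed.

Lemma approx_number_large v u N Rs d n C : 0 < v <= u -> (1 <= N)%nat -> 1 <= v * INR N ->
  (1 <= d)%nat -> length Rs = d -> (forall r, In r Rs -> v <= r <= u) -> (3 ^ d < n)%nat ->
  / sqrt (large_eps u N) <= C -> exp (u * large_log_threshold v u N) / mid_delta N <= C ->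
  exists a, approx_number_is Rs d n a /\
    1 / 32 * (/ sqrt (INR d) * Rpower (INR n) (- gR Rs)) <= a <=
    C * (/ sqrt (INR d) * Rpower (INR n) (- gR Rs)).
Proof.
  intros Hvu HN HvN Hd HRl HRs Hn3 HC1 HC2.
  assert (Hupper : exists t, 0 < t /\ few_weights_below Rs d n t /\
    1 <= C * C * / (INR d * Rpower (INR n) (2 * gR Rs)) * t).
  { destruct (Rle_dec (INR d * large_log_threshold v u N) (ln (INR n))).
    - apply (large_upper_chernoff v u N); auto. pose proof (Nat.pow_le_mono_r 3 0 d). simpl in *. lia.
    - apply (large_upper_from_mid v u N); auto. lra. }
  destruct Hupper as [t [Ht [Hfew Hup]]].
  assert (HdR : 1 <= INR d) by (apply (le_INR 1); auto).
  assert (Hn1 : (1 <= n)%nat) by (pose proof (Nat.pow_le_mono_r 3 0 d); simpl in *; lia).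
  assert (HnR : 1 <= INR n) by (apply (le_INR 1); auto).
  destruct (gR_bounds v u Rs d Hvu HRs HRl Hd) as [Hg0 _].
  set (P := Rpower (INR n) (2 * gR Rs)) in *.
  assert (HP : 1 <= P) by (apply Rpower_ge1; lra).
  set (ph := / sqrt (INR d) * Rpower (INR n) (- gR Rs)).
  assert (Hph0 : 0 <= ph).
  { apply Rmult_le_pos; [left; apply Rinv_0_lt_compat, sqrt_lt_R0; lra|].
    unfold Rpower; left; apply exp_pos. }
  assert (Hph : ph * ph = / (INR d * P)).
  { unfold ph, P. rewrite Rinv_mult, <- Rpower_Ropp.
    replace (- (2 * gR Rs)) with (- gR Rs + - gR Rs) by ring. rewrite Rpower_plus.
    rewrite <- (sqrt_sqrt (INR d)) at 3 by lra. rewrite Rinv_mult. ring. }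
  assert (HC : 0 <= C) by (eapply Rle_trans; [|exact HC1];
    left; apply Rinv_0_lt_compat, sqrt_lt_R0, (large_eps_spec v u N Hvu)).
  apply (approx_number_within Rs d n t (1 + INR d * P)); auto; try nra.
  - apply (large_many_weights Rs d n); auto. intros r Hr. destruct (HRs r Hr). lra.
  - rewrite Hph, Rmult_assoc.
    replace (/ (INR d * P) * (1 + INR d * P)) with (/ (INR d * P) + 1) by (field; nra).
    assert (/ (INR d * P) <= 1) by (rewrite <- Rinv_1; apply Rinv_le_contravar; nra). lra.
Qed.

Theorem theorem2p1 :
  forall u v : R, 0 < v <= u ->
  exists c C : R, 0 < c <= C /\
    forall (d : nat) (Rs : list R),
      (1 <= d)%nat -> length Rs = d ->
      (forall r, In r Rs -> v <= r <= u) -> In u Rs -> In v Rs ->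
      forall n : nat, (1 <= n)%nat ->
        exists a : R, approx_number_is Rs d n a /\
          c * phi Rs d n <= a <= C * phi Rs d n.
Proof.
  intros u v Hvu.
  set (N := S (nat_up (/ v))).
  assert (HN : (1 <= N)%nat) by (unfold N; lia).
  assert (HvN : 1 <= v * INR N).
  { unfold N. rewrite S_INR. destruct (nat_up_spec (/ v)) as [K1 _]; [left; apply Rinv_0_lt_compat; lra|].
    apply Rle_trans with (v * / v); [right; field; lra|apply Rmult_le_compat_l; lra]. }
  destruct (mid_delta_spec N HN) as [[Hdl _] _].
  destruct (large_eps_spec v u N Hvu) as [He _].
  set (A1 := / mid_delta N).
  set (A2 := exp (u * large_log_threshold v u N) / mid_delta N).
  set (A3 := / sqrt (large_eps u N)).
  assert (0 < A1) by (apply Rinv_0_lt_compat; lra).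
  assert (0 < A2) by (apply Rdiv_lt_0_compat; [apply exp_pos|lra]).
  assert (0 < A3) by (apply Rinv_0_lt_compat, sqrt_lt_R0; lra).
  exists (1 / 32), (1 + A1 + A2 + A3). split; [lra|].
  intros d Rs Hd HRl HRs _ _ n Hn.
  unfold phi. destruct (Nat.leb_spec n d) as [Hnd|Hnd].
  - apply approx_number_small; auto. lra.
  - destruct (Nat.leb_spec n (3 ^ d)) as [Hn3|Hn3].
    + rewrite phi_mid_eq by (apply (lt_INR 1); lia).
      apply (approx_number_mid v N); auto; [lra|intros r Hr; apply HRs; auto|fold A1; lra].
    + apply (approx_number_large v u N); auto; fold A2 A3; lra.
Qed.
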